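(* The collection $\{\Delta_C : C \text{ a strongly connected component of } G\}$ is a finest Morse decomposition of $(\Delta,\psi)$: no Morse decomposition of $(\Delta,\psi)$ is finer than it.
   Context: $G$ is a finite directed graph (loops allowed) with vertex set $V$. $\Omega$ is the set of bi-infinite paths in $G$, i.e. sequences $(x_i)_{i\in\mathbb Z}\in V^{\mathbb Z}$ such that for every $i$ there is an edge from $x_i$ to $x_{i+1}$. Fix $h>0$. $\bar\Delta$ is the set of functions $x:\mathbb R\to V$ that are constant on each interval $[nh,(n+1)h)$, $n\in\mathbb Z$, and satisfy $(x(ih))_{i\in\mathbb Z}\in\Omega$. $\Delta=\{x(\cdot+t): x\in\bar\Delta,\ t\in\mathbb R\}$, with metric $d(x,y)=\sum_{i\in\mathbb Z}4^{-|i|}\frac1h\int_{ih}^{(i+1)h}\delta(x,y,t)\,dt$, where $\delta(x,y,t)=1$ if $x(t)\ne y(t)$ and $0$ otherwise. The flow $\psi:\mathbb R\times\Delta\to\Delta$ is $\psi(t,x)=x(\cdot+t)$. A strongly connected component of $G$ is a maximal nonempty set $C\subseteq V$ such that for all $u,v\in C$ (including $u=v$) there is a directed path of positive length from $u$ to $v$ with all vertices in $C$. The lift of $C$ is $\Delta_C=\{f\in\Delta: f(t)\in C \text{ for all } t\in\mathbb R\}$. For $x\in\Delta$, $\omega(x)$ (resp. $\alpha(x)$) is the set of limits of $\psi(t_k,x)$ along sequences $t_k\to+\infty$ (resp. $t_k\to-\infty$). A set $K$ is invariant if $\psi(t,K)\subseteq K$ for all $t\in\mathbb R$; isolated if there is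 a neighborhood $N$ of $K$ with $K\subset\operatorname{int}N$ such that $\psi(t,x)\in N$ for all $t\in\mathbb R$ implies $x\in K$. A Morse decomposition is a finite collection $\{\mathcal M_1,\dots,\mathcal M_n\}$ of non-void, pairwise disjoint, invariant, isolated, compact sets such that (1) $\omega(x),\alpha(x)\subseteq\bigcup_i\mathcal M_i$ for every $x$, and (2) (no cycles) if there are Morse sets $\mathcal M_{j_0},\dots,\mathcal M_{j_l}$ and points $x_1,\dots,x_l\notin\bigcup_i\mathcal M_i$ with $\alpha(x_m)\subseteq\mathcal M_{j_{m-1}}$ and $\omega(x_m)\subseteq\mathcal M_{j_m}$ for $m=1,\dots,l$, then $\mathcal M_{j_0}\ne\mathcal M_{j_l}$. A Morse decomposition $\{\mathcal M_1,\dots,\mathcal M_n\}$ is finer than $\{\mathcal M'_1,\dots,\mathcal M'_l\}$ if for every $j$ there is $i$ with $\mathcal M_i\subseteq\mathcal M'_j$, with proper containment for at least one $j$. *)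

From Stdlib Require Import Reals Lra ZArith List Classical ClassicalEpsilon.
Open Scope R_scope.

Section Defs.
Variables (V : Type) (E : V -> V -> Prop) (h : R).

Definition finite_type : Prop := exists l : list V, forall v : V, In v l.

Inductive pathIn (C : V -> Prop) : V -> V -> Prop :=
| pathIn_edge : forall u v, C u -> C v -> E u v -> pathIn C u v
| pathIn_step : forall u w v, C u -> E u w -> pathIn C w v -> pathIn C u v.

Definition strongly_conn (C : V -> Prop) : Prop :=
  forall u v, C u -> C v -> pathIn C u v.

Definition isSCC (C : V -> Prop) : Prop :=
  (exists v, C v) /\ strongly_conn C /\
  (forall C' : V -> Prop, (forall v, C v -> C' v) -> strongly_conn C' ->
     forall v, C' v -> C v).

Definition InDeltaBar (x : R -> V) : Prop :=
  (forall (n : Z) (s : R), IZR n * h <= s < (IZR n + 1) * h -> x s = x (IZR n * h)) /\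
  (forall i : Z, E (x (IZR i * h)) (x (IZR (i + 1) * h))).

Definition InDelta (x : R -> V) : Prop :=
  exists xb t, InDeltaBar xb /\ forall s, x s = xb (s + t).

Definition psi (t : R) (x : R -> V) : R -> V := fun s => x (s + t).

Definition delta (x y : R -> V) (t : R) : R :=
  if excluded_middle_informative (x t = y t) then 0 else 1.

Definition RInt (f : R -> R) (a b : R) : R :=
  epsilon (inhabits 0) (fun v => exists pr : Riemann_integrable f a b, RiemannInt pr = v).

Definition dterm (x y : R -> V) (i : Z) : R :=
  (/ 4) ^ (Z.abs_nat i) * (/ h * RInt (delta x y) (IZR i * h) ((IZR i + 1) * h)).

(* sum over i in Z, grouped as i = 0 and then (n, -n) *)
Definition dseries (x y : R -> V) (n : nat) : R :=
  match n with
  | O => dterm x y 0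
  | S _ => dterm x y (Z.of_nat n) + dterm x y (- Z.of_nat n)
  end.

Definition dist (x y : R -> V) : R :=
  epsilon (inhabits 0) (fun r => infinite_sum (dseries x y) r).

Definition set := (R -> V) -> Prop.

Definition seq_conv (a : nat -> R -> V) (y : R -> V) : Prop :=
  forall eps, 0 < eps -> exists N, forall k, (N <= k)%nat -> dist (a k) y < eps.

Definition is_open (U : set) : Prop :=
  (forall x, U x -> InDelta x) /\
  forall x, U x -> exists eps, 0 < eps /\
    forall y, InDelta y -> dist x y < eps -> U y.

Definition interior (N : set) (x : R -> V) : Prop :=
  InDelta x /\ exists eps, 0 < eps /\ forall y, InDelta y -> dist x y < eps -> N y.

Definition compact (K : set) : Prop :=
  forall (I : Type) (U : I -> set), (forall i, is_open (U i)) ->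
    (forall x, K x -> exists i, U i x) ->
    exists l : list I, forall x, K x -> exists i, In i l /\ U i x.

Definition omega_lim (x : R -> V) (y : R -> V) : Prop :=
  InDelta y /\ exists t : nat -> R,
    (forall M, exists N, forall k, (N <= k)%nat -> M < t k) /\
    seq_conv (fun k => psi (t k) x) y.

Definition alpha_lim (x : R -> V) (y : R -> V) : Prop :=
  InDelta y /\ exists t : nat -> R,
    (forall M, exists N, forall k, (N <= k)%nat -> t k < M) /\
    seq_conv (fun k => psi (t k) x) y.

Definition invariant (K : set) : Prop :=
  forall t x, K x -> K (psi t x).

Definition isolated (K : set) : Prop :=
  exists N : set, (forall x, N x -> InDelta x) /\
    (forall x, K x -> interior N x) /\
    (forall x, InDelta x -> (forall t, N (psi t x)) -> K x).

Definition subset (A B : set) : Prop := forall x, A x -> B x.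
Definition set_eq (A B : set) : Prop := forall x, A x <-> B x.

Definition MorseDecomposition (Coll : set -> Prop) : Prop :=
  (exists l : list set, forall K, Coll K -> In K l) /\
  (forall K, Coll K ->
     (forall x, K x -> InDelta x) /\ (exists x, K x) /\
     invariant K /\ isolated K /\ compact K) /\
  (forall K K', Coll K -> Coll K' -> K <> K' -> forall x, ~ (K x /\ K' x)) /\
  (forall x, InDelta x ->
     (forall y, omega_lim x y -> exists K, Coll K /\ K y) /\
     (forall y, alpha_lim x y -> exists K, Coll K /\ K y)) /\
  (forall (l : nat) (M : nat -> set) (xs : nat -> R -> V),
     (1 <= l)%nat ->
     (forall m, (m <= l)%nat -> Coll (M m)) ->
     (forall m, (1 <= m <= l)%nat ->
        InDelta (xs m) /\ (forall K, Coll K -> ~ K (xs m)) /\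
        (forall y, alpha_lim (xs m) y -> M (m - 1)%nat y) /\
        (forall y, omega_lim (xs m) y -> M m y)) ->
     ~ set_eq (M 0%nat) (M l)).

Definition finer (Coll Coll' : set -> Prop) : Prop :=
  (forall K', Coll' K' -> exists K, Coll K /\ subset K K') /\
  (exists K' K, Coll' K' /\ Coll K /\ subset K K' /\ ~ subset K' K).

Definition DeltaC (C : V -> Prop) : set :=
  fun f => InDelta f /\ forall t, C (f t).

Definition SCCcollection : set -> Prop :=
  fun K => exists C, isSCC C /\ K = DeltaC C.

End Defs.

(* An element of Delta is a bi-infinite path of G read with a phase in [0, h), and two
   elements are close iff their paths agree on a long window around time 0 and their phases
   are close. A diagonal argument over the finitely many vertices then makes each lift
   Delta_C compact; it is invariant, and isolated because the metric sees the central cell.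
   The omega- (alpha-) limit set of an orbit lies in the lift of the component in which its
   path eventually (initially) stays, so an orbit connecting two lifts follows a path from one
   component to another, never back; a cycle of connecting orbits would thus be a cycle among
   distinct components. Finally, a path in C containing every finite walk of C infinitely
   often has the whole of Delta_C as omega-limit set, and this set contains the orbit itself,
   so every Morse decomposition puts Delta_C inside a single Morse set and none is finer. *)

From Stdlib Require Import Reals Lra Lia ZArith List Classical ClassicalEpsilon.
From Stdlib Require Import FunctionalExtensionality PropExtensionality.
From Coquelicot Require Import Coquelicot.
From Pilot Require Import Defs.
Open Scope R_scope.

Definition floorZ (r : R) : Z := (up r - 1)%Z.

Lemma floorZ_spec r : IZR (floorZ r) <= r < IZR (floorZ r) + 1.
Proof.
  unfold floorZ. destruct (archimed r) as [H1 H2].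
  rewrite minus_IZR. split; lra.
Qed.

Lemma floorZ_unique n r : IZR n <= r < IZR n + 1 -> floorZ r = n.
Proof.
  intros [H1 H2]. destruct (floorZ_spec r) as [H3 H4].
  assert (A : (floorZ r < n + 1)%Z) by (apply lt_IZR; rewrite plus_IZR; simpl; lra).
  assert (B : (n < floorZ r + 1)%Z) by (apply lt_IZR; rewrite plus_IZR; simpl; lra).
  lia.
Qed.

Lemma floorZ_IZR n : floorZ (IZR n) = n.
Proof. apply floorZ_unique; lra. Qed.

Lemma floorZ_addZ r n : floorZ (r + IZR n) = (floorZ r + n)%Z.
Proof. apply floorZ_unique. destruct (floorZ_spec r). rewrite plus_IZR. lra. Qed.

Lemma nat_large (r : R) : exists M : nat, r < INR M.
Proof.
  destruct (archimed r) as [H1 _]. exists (Z.to_nat (up r)).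
  destruct (Z_lt_le_dec (up r) 0).
  - replace (Z.to_nat (up r)) with 0%nat by lia. simpl.
    assert (IZR (up r) <= -1) by (apply IZR_le; lia). lra.
  - rewrite INR_IZR_INZ, Z2Nat.id by lia. auto.
Qed.

Lemma pow_le_pow_of_le (a : R) k n : 0 <= a <= 1 -> (k <= n)%nat -> a ^ n <= a ^ k.
Proof.
  intros Ha Hkn. induction Hkn; [lra|]. simpl.
  assert (0 <= a ^ m) by (apply pow_le; lra). nra.
Qed.

Lemma half_pow_pos n : 0 < (/2) ^ n.
Proof. apply pow_lt; lra. Qed.

Lemma quarter_pow_pos n : 0 < (/4) ^ n.
Proof. apply pow_lt; lra. Qed.

Lemma half_pow_anti k n : (k <= n)%nat -> (/2) ^ n <= (/2) ^ k.
Proof. intros. apply pow_le_pow_of_le; auto; lra. Qed.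

Lemma quarter_pow_anti k n : (k <= n)%nat -> (/4) ^ n <= (/4) ^ k.
Proof. intros. apply pow_le_pow_of_le; auto; lra. Qed.

Lemma quarter_pow_eq n : (/4) ^ n = (/2) ^ n * (/2) ^ n.
Proof. rewrite <- Rpow_mult_distr. f_equal. field. Qed.

Lemma half_pow_small eps : 0 < eps -> exists N, forall n, (N <= n)%nat -> (/2) ^ n < eps.
Proof.
  intros He. destruct (pow_lt_1_zero (/2) ltac:(rewrite Rabs_right; lra) eps He) as [N HN].
  exists N. intros n Hn. specialize (HN n Hn). rewrite Rabs_right in HN; auto.
  left; apply half_pow_pos.
Qed.

Lemma sum_half_pow_le N : sum_f_R0 (fun n => (/2) ^ n) N <= 2.
Proof.
  assert (E : sum_f_R0 (fun n => (/2) ^ n) N = 2 - 2 * (/2) ^ S N).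
  { induction N; simpl; [lra|]. rewrite IHN. simpl. lra. }
  rewrite E. pose proof (half_pow_pos (S N)). lra.
Qed.

Lemma sum_f_R0_ge_term s a N : (forall n, 0 <= s n) -> (a <= N)%nat -> s a <= sum_f_R0 s N.
Proof.
  intros Hs Ha. induction N.
  - replace a with 0%nat by lia. simpl. lra.
  - destruct (Nat.eq_dec a (S N)) as [->|Hne].
    + simpl. pose proof (cond_pos_sum s N Hs). lra.
    + simpl. specialize (IHN ltac:(lia)). specialize (Hs (S N)). lra.
Qed.

Lemma sum_f_R0_ge_two s a b : (forall n, 0 <= s n) -> a <> b ->
  s a + s b <= sum_f_R0 s (Nat.max a b).
Proof.
  intros Hs. revert a b.
  assert (Hlt : forall a b, (a < b)%nat -> s a + s b <= sum_f_R0 s b).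
  { intros a [|b] Hab; [lia|]. simpl.
    pose proof (sum_f_R0_ge_term s a b Hs ltac:(lia)). lra. }
  intros a b Hab. destruct (Nat.lt_ge_cases a b) as [H|H].
  - rewrite Nat.max_r by lia. auto.
  - rewrite Nat.max_l by lia. specialize (Hlt b a ltac:(lia)). lra.
Qed.

Lemma Un_cv_le_bound u l B : Un_cv u l -> (forall n, u n <= B) -> l <= B.
Proof.
  intros Hu HB. destruct (Rle_dec l B) as [|Hn]; auto. exfalso.
  destruct (Hu (l - B)) as [N HN]; [lra|]. specialize (HN N (le_n N)). specialize (HB N).
  unfold Rdist in HN. apply Rabs_def2 in HN. lra.
Qed.

Lemma is_RInt_step (f : R -> R) a b v : a <= b -> (forall s, a <= s < b -> f s = v) ->
  is_RInt f a b ((b - a) * v).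
Proof.
  intros Hab Hf. apply is_RInt_ext with (f := fun _ => v).
  - intros x. rewrite Rmin_left, Rmax_right by auto. intros Hx. symmetry. apply Hf. lra.
  - exact (is_RInt_const a b v).
Qed.

Lemma RInt_of_is_RInt f a b v : is_RInt f a b v -> Defs.RInt f a b = v.
Proof.
  intro H.
  assert (ex : ex_RInt f a b) by (exists v; auto).
  pose (pr := ex_RInt_Reals_0 _ _ _ ex).
  unfold Defs.RInt.
  destruct (epsilon_spec (inhabits 0) (fun v => exists pr, RiemannInt pr = v)
     (ex_intro _ (RiemannInt pr) (ex_intro _ pr eq_refl))) as [pr' Hpr'].
  rewrite <- Hpr', <- RInt_Reals. apply is_RInt_unique. auto.
Qed.

(** * Delta as phase-shifted paths *)

Section Representation.
Variables (V : Type) (E : V -> V -> Prop) (h : R).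
Hypothesis Hh : 0 < h.

Definition isPath (p : Z -> V) : Prop := forall i, E (p i) (p (i + 1)%Z).

Definition rep (p : Z -> V) (t : R) : R -> V := fun s => p (floorZ ((s + t) / h)).

Definition shiftp (m : Z) (p : Z -> V) : Z -> V := fun i => p (m + i)%Z.

Lemma floorZ_div n r : IZR n * h <= r < (IZR n + 1) * h -> floorZ (r / h) = n.
Proof.
  intros [H1 H2]. apply floorZ_unique.
  split; [apply Rmult_le_reg_r with h | apply Rmult_lt_reg_r with h]; auto;
    unfold Rdiv; rewrite Rmult_assoc, Rinv_l; lra.
Qed.

Lemma floorZ_div_spec r : IZR (floorZ (r / h)) * h <= r < (IZR (floorZ (r / h)) + 1) * h.
Proof.
  destruct (floorZ_spec (r / h)) as [H1 H2].
  apply Rmult_le_compat_r with (r := h) in H1; [|lra].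
  apply Rmult_lt_compat_r with (r := h) in H2; [|lra].
  unfold Rdiv in *. rewrite Rmult_assoc, Rinv_l in H1, H2; lra.
Qed.

Lemma isPath_shiftp m p : isPath p -> isPath (shiftp m p).
Proof.
  intros H i. unfold shiftp. replace (m + (i + 1))%Z with ((m + i) + 1)%Z by lia. apply H.
Qed.


Lemma rep_shiftp p t m : rep p t = rep (shiftp m p) (t - IZR m * h).
Proof.
  apply functional_extensionality. intro s. unfold rep, shiftp. f_equal.
  replace ((s + (t - IZR m * h)) / h) with ((s + t) / h + IZR (- m)).
  - rewrite floorZ_addZ. lia.
  - rewrite opp_IZR. field. lra.
Qed.

Lemma psi_rep a p t : psi V a (rep p t) = rep p (t + a).
Proof.
  apply functional_extensionality. intro s. unfold psi, rep. do 3 f_equal. ring.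
Qed.

Lemma psi_rep_shiftp p t a m : psi V a (rep p t) = rep (shiftp m p) (t + a - IZR m * h).
Proof. rewrite psi_rep. apply rep_shiftp. Qed.

Lemma rep_at p t j : rep p t (IZR j * h - t) = p j.
Proof.
  unfold rep. f_equal. replace ((IZR j * h - t + t) / h) with (IZR j) by (field; lra).
  apply floorZ_IZR.
Qed.

Lemma InDelta_rep x : InDelta V E h x -> exists p t, isPath p /\ 0 <= t < h /\ x = rep p t.
Proof.
  intros [xb [t0 [[Hconst Hedge] Hx]]].
  set (p := fun i => xb (IZR i * h)).
  assert (Hxp : x = rep p t0).
  { apply functional_extensionality. intro s. rewrite Hx. unfold rep, p.
    apply Hconst. apply floorZ_div_spec. }
  set (m := floorZ (t0 / h)).
  exists (shiftp m p), (t0 - IZR m * h). split; [|split].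
  - apply isPath_shiftp. intro i. apply Hedge.
  - destruct (floorZ_div_spec t0). fold m in H, H0. lra.
  - rewrite Hxp. apply rep_shiftp.
Qed.

Lemma rep_InDelta p t : isPath p -> InDelta V E h (rep p t).
Proof.
  intro Hp. exists (rep p 0), t. split; [split|].
  - intros n s Hs. unfold rep. rewrite !Rplus_0_r, (floorZ_div n s) by auto.
    f_equal. symmetry. apply floorZ_div. lra.
  - intro i. unfold rep. rewrite !Rplus_0_r.
    rewrite (floorZ_div i), (floorZ_div (i + 1)); [apply Hp | |]; rewrite ?plus_IZR; simpl; lra.
  - intro s. unfold rep. rewrite Rplus_0_r. reflexivity.
Qed.

Lemma InDelta_psi x t : InDelta V E h x -> InDelta V E h (psi V t x).
Proof.
  intros Hx. destruct (InDelta_rep x Hx) as [p [t0 [Hp [_ ->]]]].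
  rewrite psi_rep. apply rep_InDelta; auto.
Qed.

End Representation.

(** * The metric *)

Section Metric.
Variables (V : Type) (E : V -> V -> Prop) (h : R).
Hypothesis Hh : 0 < h.
Local Notation Delta := (InDelta V E h).
Local Notation rep := (rep V h).
Local Notation isPath := (isPath V E).
Local Notation dist := (dist V h).
Local Notation dterm := (dterm V h).
Local Notation dseries := (dseries V h).

Definition mismatch (u v : V) : R := if excluded_middle_informative (u = v) then 0 else 1.

Lemma mismatch_bounds u v : 0 <= mismatch u v <= 1.
Proof. unfold mismatch. destruct excluded_middle_informative; lra. Qed.

Lemma mismatch_refl u : mismatch u u = 0.
Proof. unfold mismatch. destruct excluded_middle_informative; congruence. Qed.

Lemma mismatch_neq u v : u <> v -> mismatch u v = 1.
Proof. unfold mismatch. destruct excluded_middle_informative; congruence. Qed.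

Lemma delta_sym x y : delta V x y = delta V y x.
Proof.
  apply functional_extensionality. intro s. unfold delta.
  do 2 destruct excluded_middle_informative; congruence.
Qed.

(* For [t' <= t <= h], on the cell [[ih, (i+1)h)] the function [rep p t] steps from [p i]
   to [p (i+1)] at [(i+1)h - t], and [rep q t'] steps from [q i] to [q (i+1)] at [(i+1)h - t']. *)
Definition cell_value (p q : Z -> V) (t t' : R) (i : Z) : R :=
  (h - t) * mismatch (p i) (q i) + (t - t') * mismatch (p (i + 1)%Z) (q i)
  + t' * mismatch (p (i + 1)%Z) (q (i + 1)%Z).

Definition cell_integral (x y : R -> V) (i : Z) : R :=
  Defs.RInt (delta V x y) (IZR i * h) ((IZR i + 1) * h).

Lemma is_RInt_cell p q t t' i : 0 <= t' <= t -> t <= h ->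
  is_RInt (delta V (rep p t) (rep q t')) (IZR i * h) ((IZR i + 1) * h) (cell_value p q t t' i).
Proof.
  intros H1 H2.
  set (a := IZR i * h). set (c1 := (IZR i + 1) * h - t). set (c2 := (IZR i + 1) * h - t').
  set (b := (IZR i + 1) * h).
  assert (I1 : is_RInt (delta V (rep p t) (rep q t')) a c1 ((c1 - a) * mismatch (p i) (q i))).
  { apply is_RInt_step; [unfold a, c1; lra|]. intros s Hs.
    unfold delta, rep. rewrite !(floorZ_div h Hh i) by (unfold a, c1 in *; lra). reflexivity. }
  assert (I2 : is_RInt (delta V (rep p t) (rep q t')) c1 c2
                 ((c2 - c1) * mismatch (p (i + 1)%Z) (q i))).
  { apply is_RInt_step; [unfold c1, c2; lra|]. intros s Hs.
    unfold delta, rep. rewrite (floorZ_div h Hh (i + 1)), (floorZ_div h Hh i);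
      [reflexivity | |]; rewrite ?plus_IZR; simpl; unfold c1, c2 in *; lra. }
  assert (I3 : is_RInt (delta V (rep p t) (rep q t')) c2 b
                 ((b - c2) * mismatch (p (i + 1)%Z) (q (i + 1)%Z))).
  { apply is_RInt_step; [unfold c2, b; lra|]. intros s Hs.
    unfold delta, rep. rewrite !(floorZ_div h Hh (i + 1));
      [reflexivity | |]; rewrite ?plus_IZR; simpl; unfold c2, b in *; lra. }
  pose proof (is_RInt_Chasles _ _ _ _ _ _ (is_RInt_Chasles _ _ _ _ _ _ I1 I2) I3) as I.
  replace (cell_value p q t t' i) with
    (plus (plus ((c1 - a) * mismatch (p i) (q i)) ((c2 - c1) * mismatch (p (i + 1)%Z) (q i)))
          ((b - c2) * mismatch (p (i + 1)%Z) (q (i + 1)%Z))); auto.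
  unfold plus; simpl. unfold cell_value, a, b, c1, c2. ring.
Qed.

Lemma cell_integral_sym x y i : cell_integral x y i = cell_integral y x i.
Proof. unfold cell_integral. rewrite delta_sym. reflexivity. Qed.

Lemma cell_integral_rep p q t t' i : 0 <= t' <= t -> t <= h ->
  cell_integral (rep p t) (rep q t') i = cell_value p q t t' i.
Proof. intros. apply RInt_of_is_RInt, is_RInt_cell; auto. Qed.

Lemma cell_integral_rep_rev p q t t' i : 0 <= t <= t' -> t' <= h ->
  cell_integral (rep p t) (rep q t') i = cell_value q p t' t i.
Proof. intros. rewrite cell_integral_sym. apply cell_integral_rep; auto. Qed.

Lemma is_RInt_cell_integral x y i : Delta x -> Delta y ->
  is_RInt (delta V x y) (IZR i * h) ((IZR i + 1) * h) (cell_integral x y i).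
Proof.
  intros Hx Hy. destruct (InDelta_rep V E h Hh x Hx) as [p [t [_ [Ht ->]]]].
  destruct (InDelta_rep V E h Hh y Hy) as [q [t' [_ [Ht' ->]]]].
  destruct (Rle_dec t' t).
  - rewrite cell_integral_rep by lra. apply is_RInt_cell; lra.
  - rewrite delta_sym, cell_integral_sym, cell_integral_rep by lra. apply is_RInt_cell; lra.
Qed.

Lemma cell_value_terms_nonneg p q t t' i : 0 <= t' <= t -> t <= h ->
  0 <= (h - t) * mismatch (p i) (q i) /\
  0 <= (t - t') * mismatch (p (i + 1)%Z) (q i) /\
  0 <= t' * mismatch (p (i + 1)%Z) (q (i + 1)%Z).
Proof.
  intros. pose proof (mismatch_bounds (p i) (q i)).
  pose proof (mismatch_bounds (p (i + 1)%Z) (q i)).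
  pose proof (mismatch_bounds (p (i + 1)%Z) (q (i + 1)%Z)).
  repeat split; apply Rmult_le_pos; lra.
Qed.

Lemma cell_value_bounds p q t t' i : 0 <= t' <= t -> t <= h -> 0 <= cell_value p q t t' i <= h.
Proof.
  intros. destruct (cell_value_terms_nonneg p q t t' i) as [A [B C]]; auto.
  pose proof (mismatch_bounds (p i) (q i)).
  pose proof (mismatch_bounds (p (i + 1)%Z) (q i)).
  pose proof (mismatch_bounds (p (i + 1)%Z) (q (i + 1)%Z)).
  unfold cell_value. split; [lra | nra].
Qed.

Lemma cell_integral_bounds x y i : Delta x -> Delta y -> 0 <= cell_integral x y i <= h.
Proof.
  intros Hx Hy. destruct (InDelta_rep V E h Hh x Hx) as [p [t [_ [Ht ->]]]].
  destruct (InDelta_rep V E h Hh y Hy) as [q [t' [_ [Ht' ->]]]].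
  destruct (Rle_dec t' t).
  - rewrite cell_integral_rep by lra. apply cell_value_bounds; lra.
  - rewrite cell_integral_rep_rev by lra. apply cell_value_bounds; lra.
Qed.

Lemma cell_integral_triangle x y z i : Delta x -> Delta y -> Delta z ->
  cell_integral x z i <= cell_integral x y i + cell_integral y z i.
Proof.
  intros Hx Hy Hz.
  apply (is_RInt_le (delta V x z) (fun s => plus (delta V x y s) (delta V y z s))
           (IZR i * h) ((IZR i + 1) * h)).
  - nra.
  - apply is_RInt_cell_integral; auto.
  - apply (is_RInt_plus (delta V x y) (delta V y z)); apply is_RInt_cell_integral; auto.
  - intros s _. unfold plus; simpl. unfold delta.
    repeat destruct excluded_middle_informative; try lra. congruence.
Qed.

Lemma cell_integral_refl x i : Delta x -> cell_integral x x i = 0.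
Proof.
  intros Hx. destruct (InDelta_rep V E h Hh x Hx) as [p [t [_ [Ht ->]]]].
  rewrite cell_integral_rep by lra. unfold cell_value. rewrite !mismatch_refl. ring.
Qed.

Lemma dterm_eq x y i : dterm x y i = (/4) ^ Z.abs_nat i * (/ h * cell_integral x y i).
Proof. reflexivity. Qed.

Lemma dterm_bounds x y i : Delta x -> Delta y -> 0 <= dterm x y i <= (/4) ^ Z.abs_nat i.
Proof.
  intros Hx Hy. rewrite dterm_eq. pose proof (cell_integral_bounds x y i Hx Hy).
  pose proof (quarter_pow_pos (Z.abs_nat i)).
  assert (0 <= / h * cell_integral x y i <= 1).
  { split; [apply Rmult_le_pos; [left; apply Rinv_0_lt_compat|]; lra|].
    apply Rmult_le_reg_l with h; auto. rewrite <- Rmult_assoc, Rinv_r; lra. }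
  split; [apply Rmult_le_pos; lra|]. nra.
Qed.

Lemma dseries_S x y n :
  dseries x y (S n) = dterm x y (Z.of_nat (S n)) + dterm x y (- Z.of_nat (S n)).
Proof. reflexivity. Qed.

Lemma dseries_bounds x y n : Delta x -> Delta y -> 0 <= dseries x y n <= 2 * (/4) ^ n.
Proof.
  intros Hx Hy. destruct n.
  - pose proof (dterm_bounds x y 0 Hx Hy). simpl in *. lra.
  - rewrite dseries_S.
    pose proof (dterm_bounds x y (Z.of_nat (S n)) Hx Hy) as A.
    pose proof (dterm_bounds x y (- Z.of_nat (S n)) Hx Hy) as B.
    replace (Z.abs_nat (Z.of_nat (S n))) with (S n) in A by lia.
    replace (Z.abs_nat (- Z.of_nat (S n))) with (S n) in B by lia. lra.
Qed.

Lemma dseries_nonneg x y : Delta x -> Delta y -> forall n, 0 <= dseries x y n.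
Proof. intros. apply dseries_bounds; auto. Qed.

Lemma dterm_le_dseries x y i : Delta x -> Delta y -> dterm x y i <= dseries x y (Z.abs_nat i).
Proof.
  intros Hx Hy. destruct (Z.abs_nat i) eqn:Ei.
  - replace i with 0%Z by lia. simpl. lra.
  - rewrite dseries_S.
    assert (i = Z.of_nat (S n) \/ i = (- Z.of_nat (S n))%Z) as [-> | ->] by lia.
    + pose proof (dterm_bounds x y (- Z.of_nat (S n)) Hx Hy). lra.
    + pose proof (dterm_bounds x y (Z.of_nat (S n)) Hx Hy). lra.
Qed.

Lemma dist_spec x y : Delta x -> Delta y -> infinite_sum (dseries x y) (dist x y).
Proof.
  intros Hx Hy.
  assert (Hg : Un_growing (sum_f_R0 (dseries x y))).
  { intro n. rewrite tech5. pose proof (dseries_nonneg x y Hx Hy (S n)). lra. }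
  assert (Hb : has_ub (sum_f_R0 (dseries x y))).
  { exists 4. intros r [n ->].
    apply Rle_trans with (2 * sum_f_R0 (fun n => (/2) ^ n) n);
      [|pose proof (sum_half_pow_le n); lra].
    rewrite scal_sum. apply sum_Rle. intros k _.
    pose proof (dseries_bounds x y k Hx Hy).
    pose proof (pow_incr (/4) (/2) k ltac:(lra)). lra. }
  destruct (growing_cv _ Hg Hb) as [l Hl].
  unfold Defs.dist. apply epsilon_spec. exists l. exact Hl.
Qed.

Lemma dist_ge_partial x y N : Delta x -> Delta y -> sum_f_R0 (dseries x y) N <= dist x y.
Proof. intros Hx Hy. apply sum_incr; [apply dist_spec | apply dseries_nonneg]; auto. Qed.

Lemma dist_le_of_partial x y B : Delta x -> Delta y ->
  (forall N, sum_f_R0 (dseries x y) N <= B) -> dist x y <= B.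
Proof. intros Hx Hy. apply Un_cv_le_bound, dist_spec; auto. Qed.

Lemma dist_nonneg x y : Delta x -> Delta y -> 0 <= dist x y.
Proof.
  intros. apply Rle_trans with (sum_f_R0 (dseries x y) 0).
  - apply cond_pos_sum, dseries_nonneg; auto.
  - apply dist_ge_partial; auto.
Qed.

Lemma dist_sym x y : dist x y = dist y x.
Proof.
  unfold Defs.dist, dseries, Defs.dterm. rewrite delta_sym. reflexivity.
Qed.

Lemma dist_triangle x y z : Delta x -> Delta y -> Delta z -> dist x z <= dist x y + dist y z.
Proof.
  intros Hx Hy Hz.
  assert (Hterm : forall i, dterm x z i <= dterm x y i + dterm y z i).
  { intro i. rewrite !dterm_eq. pose proof (cell_integral_triangle x y z i Hx Hy Hz).
    pose proof (quarter_pow_pos (Z.abs_nat i)).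
    assert (0 < / h) by (apply Rinv_0_lt_compat; lra).
    rewrite <- !Rmult_plus_distr_l. apply Rmult_le_compat_l, Rmult_le_compat_l; lra. }
  apply dist_le_of_partial; auto. intro N.
  apply Rle_trans with (sum_f_R0 (fun n => dseries x y n + dseries y z n) N).
  - apply sum_Rle. intros [|n] _; simpl; auto.
    pose proof (Hterm (Z.pos (Pos.of_succ_nat n))).
    pose proof (Hterm (Z.neg (Pos.of_succ_nat n))). lra.
  - rewrite sum_plus. pose proof (dist_ge_partial x y N Hx Hy).
    pose proof (dist_ge_partial y z N Hy Hz). lra.
Qed.

Lemma dist_refl x : Delta x -> dist x x = 0.
Proof.
  intros Hx. apply Rle_antisym; [|apply dist_nonneg; auto].
  apply dist_le_of_partial; auto. intro N. apply Req_le.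
  assert (Hz : forall i, dterm x x i = 0)
    by (intro i; rewrite dterm_eq, cell_integral_refl; auto; ring).
  induction N; simpl; rewrite ?IHN, !Hz; ring.
Qed.

Lemma dist_ge_dterm2 x y i j : Delta x -> Delta y -> Z.abs_nat i <> Z.abs_nat j ->
  dterm x y i + dterm x y j <= dist x y.
Proof.
  intros Hx Hy Hij.
  pose proof (dterm_le_dseries x y i Hx Hy). pose proof (dterm_le_dseries x y j Hx Hy).
  pose proof (sum_f_R0_ge_two _ _ _ (dseries_nonneg x y Hx Hy) Hij).
  pose proof (dist_ge_partial x y (Nat.max (Z.abs_nat i) (Z.abs_nat j)) Hx Hy). lra.
Qed.

Lemma dist_ge_dterm x y i : Delta x -> Delta y -> dterm x y i <= dist x y.
Proof.
  intros Hx Hy. set (j := Z.of_nat (S (Z.abs_nat i))).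
  pose proof (dist_ge_dterm2 x y i j Hx Hy ltac:(unfold j; lia)).
  pose proof (dterm_bounds x y j Hx Hy). lra.
Qed.

Lemma dist_le_of_dseries_le x y A : Delta x -> Delta y ->
  (forall n, dseries x y n <= A * (/2) ^ n) -> dist x y <= 2 * A.
Proof.
  intros Hx Hy HA.
  assert (0 <= A)
    by (pose proof (HA 0%nat); pose proof (dseries_nonneg x y Hx Hy 0); simpl in *; lra).
  apply dist_le_of_partial; auto. intro N.
  apply Rle_trans with (A * sum_f_R0 (fun n => (/2) ^ n) N).
  - rewrite scal_sum. apply sum_Rle. intros n _. rewrite Rmult_comm. auto.
  - pose proof (sum_half_pow_le N). nra.
Qed.

Lemma cell_integral_rep_agree p q t tau i : 0 <= t <= h -> 0 <= tau <= h ->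
  p i = q i -> p (i + 1)%Z = q (i + 1)%Z ->
  cell_integral (rep p t) (rep q tau) i <= Rabs (t - tau).
Proof.
  intros Ht Htau E1 E2. pose proof (mismatch_bounds (q (i + 1)%Z) (q i)).
  destruct (Rle_dec tau t).
  - rewrite cell_integral_rep by lra. unfold cell_value. rewrite E1, E2, !mismatch_refl.
    rewrite Rabs_right by lra. nra.
  - rewrite cell_integral_rep_rev by lra. unfold cell_value. rewrite E1, E2, !mismatch_refl.
    rewrite Rabs_left by lra. nra.
Qed.

Lemma dist_rep_le_of_agree p q t tau k : isPath p -> isPath q -> 0 <= t <= h -> 0 <= tau <= h ->
  (forall j, (Z.abs j <= Z.of_nat k + 1)%Z -> p j = q j) ->
  dist (rep p t) (rep q tau) <= 2 * (2 * (Rabs (t - tau) / h) + 2 * (/2) ^ k).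
Proof.
  intros Hp Hq Ht Htau Hag.
  pose proof (rep_InDelta V E h Hh p t Hp) as Dx. pose proof (rep_InDelta V E h Hh q tau Hq) as Dy.
  apply dist_le_of_dseries_le; auto. intro n.
  assert (Hu : 0 <= Rabs (t - tau) / h)
    by (apply Rmult_le_pos; [apply Rabs_pos | left; apply Rinv_0_lt_compat; lra]).
  pose proof (half_pow_pos n). pose proof (half_pow_pos k).
  pose proof (pow_incr (/4) (/2) n ltac:(lra)).
  destruct (le_lt_dec n k) as [Hnk | Hnk].
  - assert (Hd : forall i, Z.abs_nat i = n ->
               dterm (rep p t) (rep q tau) i <= (/4) ^ n * (Rabs (t - tau) / h)).
    { intros i Hi. rewrite dterm_eq, Hi. apply Rmult_le_compat_l; [left; apply quarter_pow_pos|].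
      unfold Rdiv. rewrite Rmult_comm.
      apply Rmult_le_compat_r; [left; apply Rinv_0_lt_compat; lra|].
      apply cell_integral_rep_agree; auto; apply Hag; lia. }
    assert (dseries (rep p t) (rep q tau) n <= 2 * (/4) ^ n * (Rabs (t - tau) / h)).
    { destruct n.
      - pose proof (Hd 0%Z eq_refl). simpl in *. lra.
      - rewrite dseries_S. pose proof (Hd (Z.of_nat (S n)) ltac:(lia)).
        pose proof (Hd (- Z.of_nat (S n))%Z ltac:(lia)). lra. }
    nra.
  - pose proof (dseries_bounds _ _ n Dx Dy). rewrite quarter_pow_eq in H2.
    pose proof (half_pow_anti k n ltac:(lia)). nra.
Qed.

Lemma dist_rep_ge_of_avoid p q t t' j : isPath p -> isPath q -> 0 <= t <= h -> 0 <= t' <= h ->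
  q j <> p (j - 1)%Z -> q j <> p j -> q j <> p (j + 1)%Z ->
  (/4) ^ S (Z.abs_nat j) <= dist (rep p t) (rep q t').
Proof.
  intros Hp Hq Ht Ht' N1 N2 N3.
  set (x := rep p t). set (y := rep q t').
  pose proof (rep_InDelta V E h Hh p t Hp) as Dx. pose proof (rep_InDelta V E h Hh q t' Hq) as Dy.
  assert (Hj : (j - 1 + 1)%Z = j) by lia.
  assert (HJ : h <= cell_integral x y j + cell_integral x y (j - 1)).
  { unfold x, y. destruct (Rle_dec t' t).
    - rewrite !cell_integral_rep by lra.
      pose proof (cell_value_terms_nonneg p q t t' j ltac:(lra) ltac:(lra)).
      pose proof (cell_value_terms_nonneg p q t t' (j - 1) ltac:(lra) ltac:(lra)).
      unfold cell_value in *. rewrite Hj in *.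
      rewrite (mismatch_neq (p j)), (mismatch_neq (p (j + 1)%Z)) by auto. lra.
    - rewrite !cell_integral_rep_rev by lra.
      pose proof (cell_value_terms_nonneg q p t' t j ltac:(lra) ltac:(lra)).
      pose proof (cell_value_terms_nonneg q p t' t (j - 1) ltac:(lra) ltac:(lra)).
      unfold cell_value in *. rewrite Hj in *.
      rewrite (mismatch_neq (q j) (p j)), (mismatch_neq (q j) (p (j - 1)%Z)) by auto. lra. }
  pose proof (dist_ge_dterm2 x y j (j - 1)%Z Dx Dy ltac:(lia)) as HD. rewrite !dterm_eq in HD.
  pose proof (cell_integral_bounds x y j Dx Dy).
  pose proof (cell_integral_bounds x y (j - 1) Dx Dy).
  pose proof (quarter_pow_anti (Z.abs_nat j) (S (Z.abs_nat j)) ltac:(lia)).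
  pose proof (quarter_pow_anti (Z.abs_nat (j - 1)) (S (Z.abs_nat j)) ltac:(lia)).
  assert (Hih : 0 < / h) by (apply Rinv_0_lt_compat; lra).
  set (a := (/4) ^ S (Z.abs_nat j)) in *.
  assert (0 < a) by apply quarter_pow_pos.
  assert (1 <= / h * (cell_integral x y j + cell_integral x y (j - 1))).
  { apply Rmult_le_reg_l with h; auto. rewrite <- Rmult_assoc, Rinv_r; lra. }
  assert (0 <= / h * cell_integral x y j) by (apply Rmult_le_pos; lra).
  assert (0 <= / h * cell_integral x y (j - 1)) by (apply Rmult_le_pos; lra).
  nra.
Qed.

Lemma dist_pos x y s : Delta x -> Delta y -> x s <> y s -> 0 < dist x y.
Proof.
  intros Hx Hy Hne.
  assert (Hcell : forall i, 0 < cell_integral x y i -> 0 < dist x y).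
  { intros i Hi. pose proof (dist_ge_dterm x y i Hx Hy). rewrite dterm_eq in H.
    assert (0 < (/4) ^ Z.abs_nat i * (/ h * cell_integral x y i)).
    { apply Rmult_lt_0_compat; [apply quarter_pow_pos|].
      apply Rmult_lt_0_compat; auto. apply Rinv_0_lt_compat; lra. }
    lra. }
  apply (Hcell (floorZ (s / h))). destruct (floorZ_div_spec h Hh s) as [S1 S2].
  set (i := floorZ (s / h)) in *.
  destruct (InDelta_rep V E h Hh x Hx) as [p [t [_ [Ht ->]]]].
  destruct (InDelta_rep V E h Hh y Hy) as [q [t' [_ [Ht' ->]]]].
  assert (Hwlog : forall p q t t', 0 <= t' <= t -> t < h -> rep p t s <> rep q t' s ->
            0 < cell_value p q t t' i).
  { clear - Hh S1 S2. intros p q t t' Htt Hth Hne.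
    pose proof (cell_value_terms_nonneg p q t t' i ltac:(lra) ltac:(lra)).
    unfold rep, cell_value in *.
    destruct (Rlt_le_dec s ((IZR i + 1) * h - t));
      [|destruct (Rlt_le_dec s ((IZR i + 1) * h - t'))].
    - rewrite (floorZ_div h Hh i (s + t)), (floorZ_div h Hh i (s + t')) in Hne by lra.
      rewrite mismatch_neq by auto. lra.
    - rewrite (floorZ_div h Hh (i + 1) (s + t)), (floorZ_div h Hh i (s + t')) in Hne
        by (rewrite ?plus_IZR; simpl; lra).
      rewrite (mismatch_neq (p (i + 1)%Z) (q i)) by auto. lra.
    - rewrite (floorZ_div h Hh (i + 1) (s + t)), (floorZ_div h Hh (i + 1) (s + t')) in Hne
        by (rewrite ?plus_IZR; simpl; lra).
      rewrite (mismatch_neq (p (i + 1)%Z) (q (i + 1)%Z)) by auto. lra. }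
  destruct (Rle_dec t' t).
  - rewrite cell_integral_rep by lra. apply Hwlog; auto; lra.
  - rewrite cell_integral_rep_rev by lra. apply Hwlog; [lra | lra | auto].
Qed.

End Metric.

(** * Compactness *)

Lemma pigeonhole_io (A : Type) (l : list A) (G : nat -> Prop) (cls : nat -> A) :
  (forall N, exists n, (N <= n)%nat /\ G n) -> (forall n, G n -> In (cls n) l) ->
  exists a, forall N, exists n, (N <= n)%nat /\ G n /\ cls n = a.
Proof.
  revert G. induction l as [|a l IH]; intros G Hinf Hin.
  - destruct (Hinf 0%nat) as [n [_ Gn]]. destruct (Hin n Gn).
  - destruct (classic (forall N, exists n, (N <= n)%nat /\ G n /\ cls n = a)) as [H|H];
      [exists a; auto|].
    apply not_all_ex_not in H. destruct H as [N0 HN0].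
    destruct (IH (fun n => G n /\ (N0 <= n)%nat)) as [b Hb].
    + intro N. destruct (Hinf (Nat.max N N0)) as [n [Hn Gn]].
      exists n. split; [lia | split; auto; lia].
    + intros n [Gn Hn]. destruct (Hin n Gn) as [E|E]; auto. exfalso. apply HN0. exists n. auto.
    + exists b. intro N. destruct (Hb N) as [n [Hn [[Gn _] Hc]]]. exists n. auto.
Qed.

Lemma incr_seq_ge (ph : nat -> nat) :
  (forall k, (ph k < ph (S k))%nat) -> forall k, (k <= ph k)%nat.
Proof. intros H k. induction k; [lia|]. specialize (H k). lia. Qed.

Section Diagonal.
Variables (V : Type) (E : V -> V -> Prop) (h : R).
Hypothesis Hh : 0 < h.
Variable lV : list V.
Hypothesis HlV : forall v, In v lV.
Local Notation isPath := (isPath V E).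
Local Notation rep := (rep V h).
Local Notation dist := (dist V h).
Variables (P : nat -> Z -> V) (T : nat -> R).
Hypothesis HP : forall n, isPath (P n).
Hypothesis HT : forall n, 0 <= T n <= h.

(* A stage [st = (q, a)] of depth [k] prescribes the window [q] on [|j| < k] and the
   phase interval [[a, a + h/2^k]]; each stage is matched by infinitely many terms. *)
Definition matches (k : nat) (st : (Z -> V) * R) (n : nat) : Prop :=
  (forall j, (Z.abs j < Z.of_nat k)%Z -> P n j = fst st j) /\
  snd st <= T n <= snd st + h * (/2) ^ k.

Definition matches_io k st : Prop := forall N, exists n, (N <= n)%nat /\ matches k st n.

Definition refines (k : nat) (st st' : (Z -> V) * R) : Prop :=
  (forall j, (Z.abs j < Z.of_nat k)%Z -> fst st' j = fst st j) /\ snd st <= snd st' /\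
  snd st' + h * (/2) ^ S k <= snd st + h * (/2) ^ k.

Lemma refine_io k st : matches_io k st -> exists st', refines k st st' /\ matches_io (S k) st'.
Proof.
  intros HI.
  set (cls := fun n => ((P n (Z.of_nat k), P n (- Z.of_nat k)%Z),
                 if Rle_dec (T n) (snd st + h * (/2) ^ S k) then true else false)).
  destruct (pigeonhole_io _ (list_prod (list_prod lV lV) (true :: false :: nil))
              (matches k st) cls HI) as [[[u1 u2] b] Hc].
  { intros n _. apply in_prod; [apply in_prod; auto|]. unfold cls. destruct Rle_dec; simpl; auto. }
  pose proof (half_pow_pos k) as Pk.
  assert (Hs : (/2) ^ S k = / 2 * (/2) ^ k) by reflexivity.
  exists (fun j => if Z_lt_dec (Z.abs j) (Z.of_nat k) then fst st j
                 else if Z_le_dec 0 j then u1 else u2,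
          if b then snd st else snd st + h * (/2) ^ S k).
  split.
  - split; [|split]; cbn [fst snd]; rewrite ?Hs.
    + intros j Hj. destruct Z_lt_dec; [reflexivity | lia].
    + destruct b; [lra|]. assert (0 < h * (/ 2 * (/2) ^ k)) by nra. lra.
    + destruct b; nra.
  - intro N. destruct (Hc N) as [n [Hn [[G1 G2] Hcl]]]. exists n. split; auto.
    unfold cls in Hcl. injection Hcl as Hu1 Hu2 Hb. split; cbn [fst snd].
    + intros j Hj. destruct Z_lt_dec; [apply G1; auto|]. destruct Z_le_dec.
      * rewrite <- Hu1. f_equal. lia.
      * rewrite <- Hu2. f_equal. lia.
    + rewrite Hs in *. destruct Rle_dec; subst b; lra.
Qed.

Definition next_stage k st : (Z -> V) * R :=
  match excluded_middle_informative (exists st', refines k st st' /\ matches_io (S k) st') with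
  | left H => proj1_sig (constructive_indefinite_description _ H)
  | right _ => st
  end.

Fixpoint stage (k : nat) : (Z -> V) * R :=
  match k with
  | O => (fun _ => P 0%nat 0%Z, 0)
  | S k' => next_stage k' (stage k')
  end.

Lemma next_stage_spec k st : matches_io k st ->
  refines k st (next_stage k st) /\ matches_io (S k) (next_stage k st).
Proof.
  intros HI. unfold next_stage. destruct excluded_middle_informative as [H'|H'].
  - destruct (constructive_indefinite_description _ H') as [st' [A B]]. simpl. auto.
  - exfalso. apply H', refine_io. auto.
Qed.

Lemma stage_matches_io k : matches_io k (stage k).
Proof.
  induction k; [|apply next_stage_spec; auto].
  intro N. exists N. split; auto. split; simpl; [intros; lia|].
  rewrite Rmult_1_r, Rplus_0_l. apply HT.
Qed.

Lemma stage_refines k : refines k (stage k) (stage (S k)).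
Proof. apply next_stage_spec, stage_matches_io. Qed.

Lemma stage_agree k m j : (k <= m)%nat -> (Z.abs j < Z.of_nat k)%Z ->
  fst (stage m) j = fst (stage k) j.
Proof.
  intros Hkm Hj. induction Hkm; auto.
  rewrite <- IHHkm. apply (proj1 (stage_refines m)). lia.
Qed.

Lemma stage_phase_le k m : (k <= m)%nat -> snd (stage k) <= snd (stage m).
Proof.
  intros Hkm. induction Hkm; [lra|]. pose proof (proj1 (proj2 (stage_refines m))). lra.
Qed.

Lemma stage_phase_nest k m : (k <= m)%nat ->
  snd (stage m) + h * (/2) ^ m <= snd (stage k) + h * (/2) ^ k.
Proof.
  intros Hkm. induction Hkm; [lra|]. pose proof (proj2 (proj2 (stage_refines m))). lra.
Qed.

Definition pick_after k N : nat :=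
  epsilon (inhabits 0%nat) (fun n => (N <= n)%nat /\ matches k (stage k) n).

Lemma pick_after_spec k N : (N <= pick_after k N)%nat /\ matches k (stage k) (pick_after k N).
Proof. unfold pick_after. apply epsilon_spec, stage_matches_io. Qed.

Fixpoint diag (k : nat) : nat :=
  match k with O => pick_after 0 0 | S k' => pick_after (S k') (S (diag k')) end.

Lemma diag_matches k : matches k (stage k) (diag k).
Proof. destruct k; apply pick_after_spec. Qed.

Lemma diag_incr k : (diag k < diag (S k))%nat.
Proof. simpl. destruct (pick_after_spec (S k) (S (diag k))). lia. Qed.

Definition limit_path (j : Z) : V := fst (stage (S (Z.abs_nat j))) j.

Lemma diag_agree k j : (Z.abs j < Z.of_nat k)%Z -> P (diag k) j = limit_path j.
Proof.
  intros Hj. rewrite (proj1 (diag_matches k)) by auto. unfold limit_path.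
  apply stage_agree; lia.
Qed.

Lemma diagonal_subsequence : exists (ph : nat -> nat) (q : Z -> V) (tau : R),
  (forall k, (ph k < ph (S k))%nat) /\ isPath q /\ 0 <= tau <= h /\
  (forall k j, (Z.abs j < Z.of_nat k)%Z -> P (ph k) j = q j) /\
  (forall k, Rabs (T (ph k) - tau) <= h * (/2) ^ k).
Proof.
  set (a := fun k => snd (stage k)).
  assert (Hg : Un_growing a) by (intro k; apply stage_phase_le; lia).
  assert (Hnest : forall k m, a m <= a k + h * (/2) ^ k).
  { intros k m. pose proof (half_pow_pos m). destruct (le_lt_dec k m).
    - pose proof (stage_phase_nest k m l). unfold a. nra.
    - pose proof (stage_phase_le m k ltac:(lia)). pose proof (half_pow_pos k). unfold a. nra. }
  assert (Hb : has_ub a).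
  { exists h. intros r [n ->]. pose proof (Hnest 0%nat n). unfold a in *. simpl in H. lra. }
  destruct (growing_cv _ Hg Hb) as [tau Htau].
  assert (T1 : forall k, a k <= tau) by (apply growing_ineq; auto).
  assert (T2 : forall k, tau <= a k + h * (/2) ^ k)
    by (intro k; apply (Un_cv_le_bound _ _ _ Htau), Hnest).
  exists diag, limit_path, tau. split; [|split; [|split; [|split]]].
  - apply diag_incr.
  - intro j. set (k := S (S (Z.abs_nat j + Z.abs_nat (j + 1)))).
    rewrite <- (diag_agree k j), <- (diag_agree k (j + 1)) by lia. apply HP.
  - pose proof (T1 0%nat). pose proof (T2 0%nat). unfold a in *. simpl in *. lra.
  - intros. apply diag_agree. auto.
  - intro k. destruct (diag_matches k) as [_ G]. pose proof (T1 k). pose proof (T2 k).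
    unfold a in *. apply Rabs_le. lra.
Qed.

Lemma rep_seq_convergent_subseq : exists (ph : nat -> nat) (q : Z -> V) (tau : R),
  (forall k, (ph k < ph (S k))%nat) /\ isPath q /\ 0 <= tau <= h /\
  (forall k j, (Z.abs j < Z.of_nat k)%Z -> P (ph k) j = q j) /\
  seq_conv V h (fun k => rep (P (ph k)) (T (ph k))) (rep q tau).
Proof.
  destruct diagonal_subsequence as [ph [q [tau [H1 [H2 [H3 [H4 H5]]]]]]].
  exists ph, q, tau. repeat (split; auto).
  intros eps He. destruct (half_pow_small (eps / 8) ltac:(lra)) as [N HN].
  exists (S (S N)). intros k Hk. destruct k as [|[|k]]; try lia.
  assert (D : dist (rep (P (ph (S (S k)))) (T (ph (S (S k))))) (rep q tau)
              <= 2 * (2 * (Rabs (T (ph (S (S k))) - tau) / h) + 2 * (/2) ^ k)).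
  { apply (dist_rep_le_of_agree V E); auto. intros j Hj. apply H4. lia. }
  assert (Rabs (T (ph (S (S k))) - tau) / h <= (/2) ^ S (S k)).
  { apply Rmult_le_reg_l with h; auto. unfold Rdiv.
    replace (h * (Rabs (T (ph (S (S k))) - tau) * / h)) with (Rabs (T (ph (S (S k))) - tau))
      by (field; lra). auto. }
  pose proof (half_pow_anti k (S (S k)) ltac:(lia)). pose proof (HN k ltac:(lia)). lra.
Qed.

End Diagonal.

Lemma list_choice (A B : Type) (Q : A -> B -> Prop) (L : list A) :
  (forall a, In a L -> exists b, Q a b) ->
  exists lb, forall a, In a L -> exists b, In b lb /\ Q a b.
Proof.
  induction L as [|a L IH]; intros H; [exists nil; intros a []|].
  destruct (H a (or_introl eq_refl)) as [b Hb]. destruct IH as [lb Hlb].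
  { intros a' Ha'. apply H. right; auto. }
  exists (b :: lb). intros a' [<-|Ha'].
  - exists b. split; auto. left; auto.
  - destruct (Hlb a' Ha') as [b' [Hb' Q']]. exists b'. split; auto. right; auto.
Qed.

Section Compactness.
Variables (V : Type) (E : V -> V -> Prop) (h : R).
Hypothesis Hh : 0 < h.
Local Notation Delta := (InDelta V E h).
Local Notation dist := (dist V h).

Definition seq_compact (K : set V) : Prop :=
  forall a : nat -> R -> V, (forall n, K (a n)) ->
  exists (ph : nat -> nat) y, (forall k, (ph k < ph (S k))%nat) /\ K y /\
    seq_conv V h (fun k => a (ph k)) y.

Variable K : set V.
Hypothesis HKD : forall x, K x -> Delta x.

Section SeqCompact.
Hypothesis HSC : seq_compact K.

Lemma seq_compact_totally_bounded d : 0 < d ->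
  exists L, (forall w, In w L -> K w) /\ forall x, K x -> exists w, In w L /\ dist w x < d.
Proof.
  intros Hd. apply NNPP. intro H.
  assert (H' : forall L, (forall w, In w L -> K w) ->
             exists x, K x /\ forall w, In w L -> ~ dist w x < d).
  { intros L HL. apply NNPP. intro H2. apply H. exists L. split; auto.
    intros x Kx. apply NNPP. intro H3. apply H2. exists x. split; auto.
    intros w Hw Hlt. apply H3. exists w. auto. }
  destruct (H' nil) as [x0 [Kx0 _]]; [intros w []|].
  set (F := fun L => epsilon (inhabits x0) (fun x => K x /\ forall w, In w L -> ~ dist w x < d)).
  assert (FS : forall L, (forall w, In w L -> K w) ->
             K (F L) /\ forall w, In w L -> ~ dist w (F L) < d)
    by (intros L HL; apply epsilon_spec, H'; auto).
  (* A greedy [d]-separated sequence in [K]; it has no convergent subsequence. *)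
  set (Lseq := fix Lseq (n : nat) : list (R -> V) :=
         match n with O => nil | S n' => Lseq n' ++ (F (Lseq n') :: nil) end).
  assert (LK : forall n w, In w (Lseq n) -> K w).
  { induction n; simpl; intros w Hw; [destruct Hw|].
    apply in_app_or in Hw. destruct Hw as [Hw|[<-|[]]]; auto. apply FS. auto. }
  set (xs := fun n => F (Lseq n)).
  assert (Xin : forall i j, (i < j)%nat -> In (xs i) (Lseq j)).
  { intros i j Hij. induction Hij; simpl; apply in_or_app; [right; left | left]; auto. }
  assert (XK : forall n, K (xs n)) by (intro n; apply FS, LK).
  destruct (HSC xs XK) as [ph [y [Hph [Ky Hc]]]].
  destruct (Hc (d / 2) ltac:(lra)) as [N HN].
  pose proof (HN N (le_n _)) as D1. pose proof (HN (S N) ltac:(lia)) as D2.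
  assert (Hfar : ~ dist (xs (ph N)) (xs (ph (S N))) < d)
    by (unfold xs at 2; apply FS; [apply LK | apply Xin, Hph]).
  apply Hfar. pose proof (dist_triangle V E h Hh (xs (ph N)) y (xs (ph (S N))) (HKD _ (XK _))
                            (HKD _ Ky) (HKD _ (XK _))) as Htri.
  rewrite (dist_sym V h y) in Htri. lra.
Qed.

Lemma seq_compact_lebesgue_number (I : Type) (U : I -> set V) :
  (forall i, is_open V E h (U i)) -> (forall x, K x -> exists i, U i x) ->
  exists d, 0 < d /\ forall x, K x -> exists i, forall y, Delta y -> dist x y < d -> U i y.
Proof.
  intros HU Hcov. apply NNPP. intro H.
  assert (H' : forall n : nat, exists x, K x /\
             forall i, exists y, Delta y /\ dist x y < / (INR n + 1) /\ ~ U i y).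
  { intro n. apply NNPP. intro H2. apply H. exists (/ (INR n + 1)). split.
    { apply Rinv_0_lt_compat. pose proof (pos_INR n). lra. }
    intros x Kx. apply NNPP. intro H3. apply H2. exists x. split; auto. intro i.
    apply NNPP. intro H4. apply H3. exists i. intros y Dy Hy. apply NNPP. intro H5.
    apply H4. exists y. auto. }
  destruct (choice _ H') as [xs XS].
  destruct (HSC xs (fun n => proj1 (XS n))) as [ph [z [Hph [Kz Hc]]]].
  destruct (Hcov z Kz) as [i0 Hi0].
  destruct (proj2 (HU i0) z Hi0) as [eps [He Hball]].
  destruct (Hc (eps / 2) ltac:(lra)) as [N HN].
  destruct (nat_large (2 / eps)) as [M HM].
  set (k := Nat.max N M).
  pose proof (HN k ltac:(lia)) as D1.
  pose proof (incr_seq_ge ph Hph k) as Hk.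
  assert (Hinv : / (INR (ph k) + 1) < eps / 2).
  { assert (INR M <= INR (ph k)) by (apply le_INR; lia).
    assert (0 < 2 / eps) by (apply Rdiv_lt_0_compat; lra).
    replace (eps / 2) with (/ (2 / eps)) by (field; lra).
    apply Rinv_lt_contravar; [apply Rmult_lt_0_compat|]; lra. }
  destruct (proj2 (XS (ph k)) i0) as [y [Dy [Hy NU]]].
  apply NU, Hball; auto.
  pose proof (dist_triangle V E h Hh z (xs (ph k)) y (HKD _ Kz) (HKD _ (proj1 (XS _))) Dy).
  rewrite (dist_sym V h z (xs (ph k))) in H0. lra.
Qed.

Lemma compact_of_seq_compact : compact V E h K.
Proof.
  intros I U HU Hcov.
  destruct (seq_compact_lebesgue_number I U HU Hcov) as [d [Hd HLN]].
  destruct (seq_compact_totally_bounded d Hd) as [L [HLK HL]].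
  destruct (list_choice _ _ (fun w i => forall y, Delta y -> dist w y < d -> U i y) L) as [li Hli].
  { intros w Hw. apply HLN. auto. }
  exists li. intros x Kx. destruct (HL x Kx) as [w [Hw Hwx]].
  destruct (Hli w Hw) as [i [Hi Hq]]. exists i. split; auto.
Qed.

End SeqCompact.

Lemma compact_closed (HK : compact V E h K) (a : nat -> R -> V) z :
  Delta z -> (forall n, K (a n)) -> seq_conv V h a z -> K z.
Proof.
  intros Dz Ha Hc. apply NNPP. intro Hz.
  (* Cover K by balls [B(w, d(w,z)/2)], none of which is close to [z]. *)
  set (U := fun (w y : R -> V) => Delta w /\ Delta y /\ 0 < dist w z /\ dist w y < dist w z / 2).
  destruct (HK (R -> V) U) as [l Hl].
  - intro w. split; [intros y [_ [Dy _]]; auto|].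
    intros y [Dw [Dy [Hp Hwy]]]. exists (dist w z / 2 - dist w y). split; [lra|].
    intros y' Dy' Hyy'. do 3 (split; auto).
    pose proof (dist_triangle V E h Hh w y y' Dw Dy Dy'). lra.
  - intros x Kx. exists x. unfold U. do 2 (split; auto).
    assert (Hp : 0 < dist x z).
    { assert (Hne : exists s, x s <> z s).
      { apply NNPP. intro H. apply Hz. replace z with x; auto.
        apply functional_extensionality. intro s. apply NNPP. intro H2. apply H. exists s. auto. }
      destruct Hne as [s Hs]. apply (dist_pos V E h Hh x z s); auto. }
    rewrite (dist_refl V E h Hh) by auto. split; auto. lra.
  - assert (Hr : forall l' : list (R -> V), exists r, 0 < r /\
                 forall w, In w l' -> 0 < dist w z -> r <= dist w z / 2).
    { induction l' as [|w l' [r [Hr Hr']]]; [exists 1; split; [lra | intros w []]|].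
      destruct (Rlt_le_dec 0 (dist w z)).
      - exists (Rmin r (dist w z / 2)). split; [apply Rmin_pos; lra|].
        intros w' [<-|Hw'] Hp; [apply Rmin_r|].
        pose proof (Rmin_l r (dist w z / 2)). specialize (Hr' w' Hw' Hp). lra.
      - exists r. split; auto. intros w' [<-|Hw'] Hp; [lra | auto]. }
    destruct (Hr l) as [r [Hr0 Hr1]].
    destruct (Hc r Hr0) as [N HN]. specialize (HN N (le_n _)).
    destruct (Hl (a N) (Ha N)) as [w [Hw [Dw [Da [Hp Hwa]]]]].
    specialize (Hr1 w Hw Hp).
    pose proof (dist_triangle V E h Hh w (a N) z Dw Da Dz). lra.
Qed.

End Compactness.

(** * Strongly connected components *)

Section Graph.
Variables (V : Type) (E : V -> V -> Prop).
Local Notation isPath := (isPath V E).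
Local Notation pathIn := (pathIn V E).

Definition reach (u v : V) : Prop := pathIn (fun _ => True) u v.

Definition reach0 (u v : V) : Prop := u = v \/ reach u v.

Definition scc (u : V) : V -> Prop := fun v => reach u v /\ reach v u.

Lemma pathIn_mono (C C' : V -> Prop) u v :
  (forall x, C x -> C' x) -> pathIn C u v -> pathIn C' u v.
Proof. intros HC H. induction H; [apply pathIn_edge | eapply pathIn_step]; eauto. Qed.

Lemma reach_of_pathIn C u v : pathIn C u v -> reach u v.
Proof. apply pathIn_mono. auto. Qed.

Lemma reach_trans u v w : reach u v -> reach v w -> reach u w.
Proof.
  intros H1 H2.
  induction H1; [eapply pathIn_step | eapply pathIn_step; [| | apply IHpathIn]]; eauto.
Qed.

Lemma reach_edge u v : E u v -> reach u v.
Proof. intros. apply pathIn_edge; auto. Qed.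

Lemma reach0_reach u v w : reach0 u v -> reach v w -> reach u w.
Proof. intros [->|H] H2; eauto using reach_trans. Qed.

Lemma reach_reach0 u v w : reach u v -> reach0 v w -> reach u w.
Proof. intros H [<-|H2]; eauto using reach_trans. Qed.

Lemma pathIn_of_reach (S : V -> Prop) a b : reach a b ->
  (forall z, reach0 a z -> reach0 z b -> S z) -> pathIn S a b.
Proof.
  intros H. induction H; intros HS.
  - apply pathIn_edge; auto; apply HS; unfold reach0; auto using reach_edge.
  - apply pathIn_step with w; auto.
    + apply HS; [left | right; eapply pathIn_step]; eauto.
    + apply IHpathIn. intros z Z1 Z2. apply HS; auto. right.
      apply reach_reach0 with w; auto using reach_edge.
Qed.

Lemma strongly_conn_scc u : strongly_conn V E (scc u).
Proof.
  intros v w [Huv Hvu] [Huw Hwu]. apply pathIn_of_reach; [eauto using reach_trans|].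
  intros z H1 H2. split; [apply reach_reach0 with v | apply reach0_reach with w]; auto.
Qed.

Lemma isSCC_scc u : reach u u -> isSCC V E (scc u).
Proof.
  intros Hu. split; [exists u; split; auto | split; [apply strongly_conn_scc|]].
  intros C' Hsub Hs v Hv. assert (C' u) by (apply Hsub; split; auto).
  split; apply (reach_of_pathIn C'), Hs; auto.
Qed.

Lemma isSCC_eq_scc C u : isSCC V E C -> C u -> C = scc u.
Proof.
  intros [_ [Hs Hm]] Hu. apply functional_extensionality. intro v.
  apply propositional_extensionality. split.
  - intros Hv. split; apply (reach_of_pathIn C), Hs; auto.
  - intros Hv. apply (Hm (scc u)); auto using strongly_conn_scc.
    intros w Hw. split; apply (reach_of_pathIn C), Hs; auto.
Qed.

Lemma isSCC_reach C u v : isSCC V E C -> C u -> C v -> reach u v.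
Proof. intros [_ [Hs _]] Hu Hv. apply (reach_of_pathIn C), Hs; auto. Qed.

Lemma isPath_reach p i j : isPath p -> (i < j)%Z -> reach (p i) (p j).
Proof.
  intros Hp Hij. replace j with (i + Z.of_nat (S (Z.to_nat (j - i - 1))))%Z by lia.
  induction (Z.to_nat (j - i - 1)) as [|n IH].
  - apply reach_edge. apply Hp.
  - eapply reach_trans; [apply IH|]. apply reach_edge.
    replace (i + Z.of_nat (S (S n)))%Z with ((i + Z.of_nat (S n)) + 1)%Z by lia. apply Hp.
Qed.

Variable lV : list V.
Hypothesis HlV : forall v, In v lV.

Definition recurrent (f : Z -> V) (v : V) : Prop := forall N, exists i, (N <= i)%Z /\ f i = v.

Lemma eventually_recurrent f : exists N0, forall i, (N0 <= i)%Z -> recurrent f (f i).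
Proof.
  assert (H : forall l : list V, exists N, forall v, In v l -> ~ recurrent f v ->
                forall i, (N <= i)%Z -> f i <> v).
  { induction l as [|v l [N HN]]; [exists 0%Z; intros v []|].
    destruct (classic (recurrent f v)) as [Hv|Hv].
    - exists N. intros w [<-|Hw] Hnw; [contradiction|]. apply HN; auto.
    - assert (Hex : exists Nv, forall i, (Nv <= i)%Z -> f i <> v).
      { apply NNPP. intro H1. apply Hv. intro M. apply NNPP. intro H2. apply H1. exists M.
        intros i Hi Hfi. apply H2. exists i. auto. }
      destruct Hex as [Nv HNv]. exists (Z.max N Nv). intros w [<-|Hw] Hnw i Hi.
      + apply HNv. lia.
      + apply HN; auto. lia. }
  destruct (H lV) as [N HN]. exists N. intros i Hi. apply NNPP. intro Hn.
  exact (HN (f i) (HlV _) Hn i Hi eq_refl).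
Qed.

Lemma isPath_eventually_in_scc p : isPath p ->
  exists u0 N0, reach u0 u0 /\ forall i, (N0 <= i)%Z -> scc u0 (p i).
Proof.
  intros Hp. destruct (eventually_recurrent p) as [N0 HN0]. exists (p N0), N0.
  assert (Hback : forall i, (N0 <= i)%Z -> reach (p i) (p N0)).
  { intros i Hi. destruct (HN0 N0 (Z.le_refl _) (i + 1)%Z) as [i' [Hi' <-]].
    apply isPath_reach; auto; lia. }
  split; [apply Hback; lia|]. intros i Hi. split; auto.
  destruct (Z.eq_dec i N0) as [->|Hne]; [apply Hback; lia | apply isPath_reach; auto; lia].
Qed.

Lemma isPath_initially_in_scc p : isPath p ->
  exists u0 N0, reach u0 u0 /\ forall i, (i <= N0)%Z -> scc u0 (p i).
Proof.
  intros Hp. destruct (eventually_recurrent (fun i => p (- i)%Z)) as [M HM].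
  exists (p (- M)%Z), (- M)%Z.
  assert (Hfwd : forall i, (i <= - M)%Z -> reach (p (- M)%Z) (p i)).
  { intros i Hi. destruct (HM M (Z.le_refl _) (- i + 1)%Z) as [i' [Hi' Hpi]].
    cbn beta in Hpi. rewrite <- Hpi. apply isPath_reach; auto; lia. }
  split; [apply Hfwd; lia|]. intros i Hi. split; auto.
  destruct (Z.eq_dec i (- M)%Z) as [->|Hne]; [apply Hfwd; lia | apply isPath_reach; auto; lia].
Qed.

End Graph.

(** * A dense path in a component *)

Section Walks.
Variables (V : Type) (E : V -> V -> Prop).
Local Notation isPath := (isPath V E).

Inductive walk : list V -> Prop :=
| walk1 v : walk (v :: nil)
| walk_cons u v l : E u v -> walk (v :: l) -> walk (u :: v :: l).

Lemma walk_nonnil l : walk l -> l <> nil.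
Proof. destruct 1; discriminate. Qed.

Lemma walk_app l1 x l2 : walk (l1 ++ x :: nil) -> walk (x :: l2) -> walk (l1 ++ x :: l2).
Proof.
  revert x. induction l1 as [|a l1 IH]; intros x H1 H2; simpl in *; auto.
  destruct l1 as [|b l1]; simpl in *; inversion H1; subst; constructor; auto.
Qed.

Lemma walk_nth l d i : walk l -> (S i < length l)%nat -> E (nth i l d) (nth (S i) l d).
Proof.
  intros H. revert i. induction H; intros i Hi; simpl in *; [lia|].
  destruct i; auto. apply IHwalk. simpl. lia.
Qed.

Lemma walk_map_seq (f : nat -> V) a L : (forall n, E (f n) (f (S n))) -> walk (map f (seq a (S L))).
Proof.
  intros Hf. revert a. induction L; intro a; simpl; constructor; auto. apply IHL.
Qed.

Lemma pathIn_walk C u v : pathIn V E C u v ->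
  exists l, walk (u :: l ++ v :: nil) /\ List.Forall C (u :: l ++ v :: nil).
Proof.
  induction 1 as [u v Hu Hv Huv | u w v Hu Huw _ [l [Hc Hf]]].
  - exists nil. simpl. repeat constructor; auto.
  - exists (w :: l). simpl. split; constructor; auto.
Qed.

Lemma cycle_path C u : pathIn V E C u u -> exists p, isPath p /\ (forall i, C (p i)) /\ p 0%Z = u.
Proof.
  intros H. destruct (pathIn_walk C u u H) as [l [Hc Hf]].
  rewrite List.Forall_forall in Hf.
  change (walk ((u :: l) ++ u :: nil)) in Hc.
  change (forall v, In v ((u :: l) ++ u :: nil) -> C v) in Hf.
  remember (u :: l) as cyc eqn:Hcyc.
  remember (length cyc) as n eqn:Hn.
  assert (Hn0 : (0 < n)%nat) by (subst; simpl; lia).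
  exists (fun i => nth (Z.to_nat (i mod Z.of_nat n)) cyc u). split; [|split].
  - intro i. pose proof (Z.mod_pos_bound i (Z.of_nat n) ltac:(lia)) as Hr.
    pose proof (walk_nth _ u (Z.to_nat (i mod Z.of_nat n)) Hc) as HE.
    rewrite length_app in HE. simpl in HE. specialize (HE ltac:(lia)).
    rewrite app_nth1 in HE by lia.
    rewrite <- Z.add_mod_idemp_l by lia.
    remember (i mod Z.of_nat n)%Z as r eqn:Hrr. clear Hrr.
    destruct (Z.eq_dec (r + 1) (Z.of_nat n)) as [Heq|Hne].
    + rewrite Heq, Z_mod_same_full. rewrite app_nth2 in HE by lia.
      replace (S (Z.to_nat r) - length cyc)%nat with 0%nat in HE by lia.
      rewrite Hcyc in HE |- *. exact HE.
    + rewrite Z.mod_small by lia. rewrite app_nth1 in HE by lia.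
      replace (Z.to_nat (r + 1)) with (S (Z.to_nat r)) by lia. exact HE.
  - intro i. apply Hf, in_or_app.
    destruct (Nat.lt_ge_cases (Z.to_nat (i mod Z.of_nat n)) (length cyc)).
    + left. apply nth_In. auto.
    + rewrite nth_overflow by lia. right. left. auto.
  - subst cyc. reflexivity.
Qed.

End Walks.

Section DensePath.
Variables (V : Type) (E : V -> V -> Prop) (C : V -> Prop).
Hypothesis HC : strongly_conn V E C.
Variable u : V.
Hypothesis Hu : C u.
Variable lV : list V.
Hypothesis HlV : forall v, In v lV.
Local Notation walk := (walk V E).

Definition walkIn (w : list V) : Prop := walk w /\ List.Forall C w.

Definition bridge (v w : V) : list V :=
  epsilon (inhabits nil) (fun l => walkIn (v :: l ++ w :: nil)).

Lemma bridge_spec v w : C v -> C w -> walkIn (v :: bridge v w ++ w :: nil).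
Proof. intros Hv Hw. unfold bridge. apply epsilon_spec, pathIn_walk, HC; auto. Qed.

Definition join (cur w : list V) : list V :=
  match w with nil => cur | w0 :: _ => cur ++ bridge (last cur u) w0 ++ w end.

Lemma join_spec cur w : walkIn cur -> walkIn w ->
  walkIn (join cur w) /\ (exists r, join cur w = cur ++ r) /\
  (exists a, join cur w = a ++ w /\ (length cur <= length a)%nat).
Proof.
  intros [Hc Hcf] [Hw Hwf]. destruct w as [|w0 w']; [exfalso; eapply walk_nonnil; eauto|].
  simpl. set (v := last cur u).
  assert (Hcur : cur = removelast cur ++ v :: nil)
    by (apply app_removelast_last; eapply walk_nonnil; eauto).
  assert (Hv : C v).
  { rewrite List.Forall_forall in Hcf. apply Hcf.
    rewrite Hcur. apply in_or_app. right; left; auto. }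
  assert (Hw0 : C w0) by (inversion Hwf; auto).
  destruct (bridge_spec v w0 Hv Hw0) as [Hcc Hccf]. set (l := bridge v w0) in *.
  split; [split|split].
  - assert (A : walk (v :: l ++ w0 :: w')) by (apply (walk_app _ _ (v :: l)); auto).
    rewrite Hcur at 1. rewrite <- app_assoc. simpl. apply walk_app; auto. rewrite <- Hcur. auto.
  - apply Forall_app. split; auto. apply Forall_app. split; auto.
    inversion Hccf; subst. apply Forall_app in H2. tauto.
  - exists (l ++ w0 :: w'). reflexivity.
  - exists (cur ++ l). rewrite app_assoc, length_app. split; [reflexivity | lia].
Qed.

Fixpoint words (n : nat) : list (list V) :=
  match n with
  | O => nil :: nil
  | S n' => flat_map (fun w => map (fun v => v :: w) lV) (words n')
  end.

Lemma words_complete w : In w (words (length w)).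
Proof.
  induction w as [|v w IH]; simpl; [left; auto|].
  apply in_flat_map. exists w. split; auto. apply (in_map (fun x => x :: w)). auto.
Qed.

Definition walkInb (w : list V) : bool :=
  if excluded_middle_informative (walkIn w) then true else false.

Definition walks_upto (m : nat) : list (list V) :=
  flat_map (fun n => filter walkInb (words n)) (seq 0 (S m)).

Lemma walks_upto_complete w m : walkIn w -> (length w <= m)%nat -> In w (walks_upto m).
Proof.
  intros Hg Hl. apply in_flat_map. exists (length w). split; [apply in_seq; lia|].
  apply filter_In. split; [apply words_complete|]. unfold walkInb.
  destruct excluded_middle_informative; auto.
Qed.

Lemma walks_upto_walkIn w m : In w (walks_upto m) -> walkIn w.
Proof.
  intros H. apply in_flat_map in H. destruct H as [n [_ Hn]].
  apply filter_In in Hn. destruct Hn as [_ Hb].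
  unfold walkInb in Hb. destruct excluded_middle_informative; auto. discriminate.
Qed.

Lemma join_all_spec ws : forall cur, walkIn cur -> (forall w, In w ws -> walkIn w) ->
  walkIn (fold_left join ws cur) /\ (exists r, fold_left join ws cur = cur ++ r) /\
  forall w, In w ws ->
    exists a b, fold_left join ws cur = a ++ w ++ b /\ (length cur <= length a)%nat.
Proof.
  induction ws as [|w1 ws IH]; intros cur Hcur Hws; simpl.
  - split; auto. split; [exists nil; rewrite app_nil_r; auto | intros w []].
  - destruct (join_spec cur w1 Hcur (Hws w1 (or_introl eq_refl))) as [G1 [[r1 R1] [a1 [A1 L1]]]].
    destruct (IH (join cur w1) G1) as [G2 [[r2 R2] O2]]; [intros w Hw; apply Hws; right; auto|].
    split; auto. split.
    + exists (r1 ++ r2). rewrite R2, R1, app_assoc. auto.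
    + intros w [<-|Hw].
      * exists a1, r2. rewrite R2, A1, app_assoc. auto.
      * destruct (O2 w Hw) as [a [b [Hab La]]]. exists a, b. split; auto.
        rewrite R1, length_app in La. lia.
Qed.

(* Stage [m] appends, one after another, every walk in [C] of length at most [m]. *)
Fixpoint universal_walk (m : nat) : list V :=
  match m with
  | O => u :: nil
  | S m' => fold_left join (walks_upto m) (universal_walk m')
  end.

Lemma walkIn_single : walkIn (u :: nil).
Proof. split; repeat constructor; auto. Qed.

Lemma universal_walk_walkIn m : walkIn (universal_walk m).
Proof.
  induction m; [apply walkIn_single|]. simpl.
  apply join_all_spec; auto. intros w Hw. eapply walks_upto_walkIn; eauto.
Qed.

Lemma universal_walk_step m : (exists r, universal_walk (S m) = universal_walk m ++ r) /\
  forall w, walkIn w -> (length w <= S m)%nat ->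
    exists a b, universal_walk (S m) = a ++ w ++ b /\ (length (universal_walk m) <= length a)%nat.
Proof.
  destruct (join_all_spec (walks_upto (S m)) (universal_walk m) (universal_walk_walkIn m))
    as [_ [R O]]; [intros w Hw; eapply walks_upto_walkIn; eauto|].
  split; auto. intros w Hw Hl. apply O, walks_upto_complete; auto.
Qed.

Lemma universal_walk_prefix m m' : (m <= m')%nat ->
  exists r, universal_walk m' = universal_walk m ++ r.
Proof.
  intros H. induction H; [exists nil; rewrite app_nil_r; auto|].
  destruct IHle as [r Hr]. destruct (proj1 (universal_walk_step m0)) as [r' Hr'].
  exists (r ++ r'). rewrite Hr', Hr, app_assoc. auto.
Qed.

Lemma universal_walk_length m : (S m <= length (universal_walk m))%nat.
Proof.
  induction m; [simpl; lia|].
  destruct (proj2 (universal_walk_step m) (u :: nil) walkIn_single ltac:(simpl; lia))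
    as [a [b [Hab La]]].
  rewrite Hab, !length_app. simpl. lia.
Qed.

Definition universal_path (n : nat) : V := nth n (universal_walk (S n)) u.

Lemma universal_path_nth n m : (n < length (universal_walk m))%nat ->
  universal_path n = nth n (universal_walk m) u.
Proof.
  intros Hn. unfold universal_path. destruct (le_lt_dec (S n) m).
  - destruct (universal_walk_prefix (S n) m l) as [r ->].
    pose proof (universal_walk_length (S n)). rewrite app_nth1; auto. lia.
  - destruct (universal_walk_prefix m (S n) ltac:(lia)) as [r ->]. apply app_nth1. auto.
Qed.

Lemma universal_path_edge n : E (universal_path n) (universal_path (S n)).
Proof.
  pose proof (universal_walk_length (S (S n))).
  rewrite (universal_path_nth n (S (S n))), (universal_path_nth (S n) (S (S n))) by lia.
  apply walk_nth; [apply universal_walk_walkIn | lia].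
Qed.

Lemma universal_path_in n : C (universal_path n).
Proof.
  unfold universal_path. pose proof (universal_walk_length (S n)).
  destruct (universal_walk_walkIn (S n)) as [_ Hf].
  rewrite List.Forall_forall in Hf. apply Hf, nth_In. lia.
Qed.

Lemma universal_path_0 : universal_path 0 = u.
Proof. rewrite (universal_path_nth 0 0); [reflexivity | simpl; lia]. Qed.

Lemma universal_path_contains w N : walkIn w ->
  exists a, (N <= a)%nat /\ forall i, (i < length w)%nat -> universal_path (a + i) = nth i w u.
Proof.
  intros Hg. set (m := Nat.max N (length w)).
  destruct (proj2 (universal_walk_step m) w Hg ltac:(unfold m; lia)) as [a [b [Hab La]]].
  pose proof (universal_walk_length m).
  exists (length a). split; [unfold m in *; lia|].
  intros i Hi. rewrite (universal_path_nth _ (S m)) by (rewrite Hab, !length_app; lia).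
  rewrite Hab, app_nth2 by lia. replace (length a + i - length a)%nat with i by lia.
  apply app_nth1. auto.
Qed.

End DensePath.

(* Backwards, go around a cycle through [u]; forwards, follow the universal path from [u],
   which contains every finite walk in [C] beyond any given time. *)
Lemma exists_dense_path (V : Type) (E : V -> V -> Prop) (C : V -> Prop) (lV : list V) :
  (forall v, In v lV) -> strongly_conn V E C -> (exists u, C u) ->
  exists p, isPath V E p /\ (forall i, C (p i)) /\
    forall q, isPath V E q -> (forall i, C (q i)) -> forall (k : nat) (N : Z),
      exists n, (N <= n)%Z /\ forall j, (Z.abs j <= Z.of_nat k)%Z -> p (n + j)%Z = q j.
Proof.
  intros HlV HC [u Hu].
  destruct (cycle_path V E C u (HC u u Hu Hu)) as [per [Hper [HperC Hper0]]].
  set (up := universal_path V E C u lV).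
  exists (fun i => if Z_le_dec 0 i then up (Z.to_nat i) else per i). split; [|split].
  - intro i. destruct (Z_le_dec 0 i), (Z_le_dec 0 (i + 1)); try lia.
    + replace (Z.to_nat (i + 1)) with (S (Z.to_nat i)) by lia. apply universal_path_edge; auto.
    + replace i with (-1)%Z by lia. simpl. unfold up.
      rewrite (universal_path_0 V E C HC u Hu lV HlV), <- Hper0.
      apply (Hper (-1)%Z).
    + apply Hper.
  - intro i. destruct Z_le_dec; [apply universal_path_in | apply HperC]; auto.
  - intros q Hq HqC k N.
    set (f := fun n : nat => q (Z.of_nat n - Z.of_nat k)%Z).
    set (w := map f (seq 0 (S (2 * k)))).
    assert (Hg : walkIn V E C w).
    { split.
      - apply walk_map_seq. intro n. unfold f.
        replace (Z.of_nat (S n) - Z.of_nat k)%Z with ((Z.of_nat n - Z.of_nat k) + 1)%Z by lia.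
        apply Hq.
      - apply List.Forall_forall. intros x Hx. unfold w in Hx. apply in_map_iff in Hx.
        destruct Hx as [n [<- _]]. apply HqC. }
    destruct (universal_path_contains V E C HC u Hu lV HlV w (Z.to_nat N) Hg) as [a [Ha Hocc]].
    exists (Z.of_nat a + Z.of_nat k)%Z. split; [lia|].
    intros j Hj. destruct Z_le_dec; [|lia].
    set (i := Z.to_nat (j + Z.of_nat k)).
    assert (Hi : (i < length w)%nat) by (unfold w, i; rewrite length_map, length_seq; lia).
    replace (Z.to_nat (Z.of_nat a + Z.of_nat k + j)) with (a + i)%nat by (unfold i; lia).
    unfold up. rewrite Hocc by auto. unfold w. rewrite (nth_indep _ u (f 0%nat)) by auto.
    rewrite map_nth, seq_nth by (unfold i; lia). unfold f. f_equal. unfold i. lia.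
Qed.

(** * Lifts of components and limit sets *)

Section Lifts.
Variables (V : Type) (E : V -> V -> Prop) (h : R).
Hypothesis Hh : 0 < h.
Local Notation Delta := (InDelta V E h).
Local Notation DeltaC := (DeltaC V E h).
Local Notation rep := (rep V h).
Local Notation isPath := (isPath V E).
Local Notation dist := (dist V h).

Lemma DeltaC_rep_inv C p t : DeltaC C (rep p t) -> forall j, C (p j).
Proof. intros [_ H] j. specialize (H (IZR j * h - t)). rewrite rep_at in H; auto. Qed.

Lemma DeltaC_rep C p t : isPath p -> (forall j, C (p j)) -> DeltaC C (rep p t).
Proof. intros Hp HC. split; [apply rep_InDelta; auto | intro s; apply HC]. Qed.

Lemma DeltaC_invariant C : invariant V (DeltaC C).
Proof. intros t x [Hx HC]. split; [apply InDelta_psi; auto | intro s; apply HC]. Qed.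

(* The isolating neighbourhood: the points currently in [C]. A point within [1/4] of the
   lift agrees with it at the central cell, by [dist_rep_ge_of_avoid] at [j = 0]. *)
Lemma DeltaC_isolated C : isolated V E h (DeltaC C).
Proof.
  exists (fun y => Delta y /\ C (y 0)). split; [|split].
  - intros x [Hx _]; auto.
  - intros x [Hx HxC]. split; auto. exists (/4). split; [lra|].
    intros y Hy Hd. split; auto.
    destruct (InDelta_rep V E h Hh x Hx) as [p [t [Hp [Ht Hxe]]]].
    destruct (InDelta_rep V E h Hh y Hy) as [q [t' [Hq [Ht' Hye]]]].
    assert (HpC : forall j, C (p j)) by (apply (DeltaC_rep_inv C p t); rewrite <- Hxe; split; auto).
    rewrite Hye. unfold rep. rewrite Rplus_0_l, (floorZ_div h Hh 0) by lra.
    apply NNPP. intro Hn.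
    pose proof (dist_rep_ge_of_avoid V E h Hh p q t t' 0 Hp Hq ltac:(lra) ltac:(lra)) as S.
    rewrite <- Hxe, <- Hye in S. simpl in S. rewrite Rmult_1_r in S.
    assert (/4 <= dist x y) by (apply S; intro Heq; apply Hn; rewrite Heq; auto). lra.
  - intros x Hx HN. split; auto. intro t. destruct (HN t) as [_ H].
    unfold psi in H. rewrite Rplus_0_l in H. auto.
Qed.

Lemma psi_rep_window p t a :
  psi V a (rep p t) =
    rep (shiftp V (floorZ ((t + a) / h)) p) (t + a - IZR (floorZ ((t + a) / h)) * h)
  /\ 0 <= t + a - IZR (floorZ ((t + a) / h)) * h < h.
Proof.
  split; [apply psi_rep_shiftp; auto|]. destruct (floorZ_div_spec h Hh (t + a)). lra.
Qed.

Lemma orbit_limit_window p t tk q tau j : isPath p -> isPath q -> 0 <= t < h -> 0 <= tau <= h ->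
  seq_conv V h (fun k => psi V (tk k) (rep p t)) (rep q tau) ->
  exists N, forall k, (N <= k)%nat -> exists d, (-1 <= d <= 1)%Z /\
    q j = p (floorZ ((t + tk k) / h) + j + d)%Z.
Proof.
  intros Hp Hq Ht Htau Hc.
  destruct (Hc ((/4) ^ S (Z.abs_nat j)) (quarter_pow_pos _)) as [N HN].
  exists N. intros k Hk. specialize (HN k Hk). apply NNPP. intro Hn.
  destruct (psi_rep_window p t (tk k)) as [Hw Hph]. rewrite Hw in HN.
  set (m := floorZ ((t + tk k) / h)) in *.
  assert (Hfar : (/4) ^ S (Z.abs_nat j) <=
                 dist (rep (shiftp V m p) (t + tk k - IZR m * h)) (rep q tau)).
  { apply (dist_rep_ge_of_avoid V E); auto; [apply isPath_shiftp; auto | lra | | |];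
      unfold shiftp; intro Heq; apply Hn.
    - exists (-1)%Z. split; [lia|]. rewrite Heq. f_equal. lia.
    - exists 0%Z. split; [lia|]. rewrite Heq. f_equal. lia.
    - exists 1%Z. split; [lia|]. rewrite Heq. f_equal. lia. }
  lra.
Qed.

Lemma omega_lim_in p t (S : V -> Prop) N0 y : isPath p -> 0 <= t < h ->
  (forall i, (N0 <= i)%Z -> S (p i)) -> omega_lim V E h (rep p t) y -> forall s, S (y s).
Proof.
  intros Hp Ht HS [Dy [tk [Htk Hc]]] s.
  destruct (InDelta_rep V E h Hh y Dy) as [q [tau [Hq [Htau ->]]]].
  unfold rep. set (j := floorZ ((s + tau) / h)).
  destruct (orbit_limit_window p t tk q tau j Hp Hq Ht ltac:(lra) Hc) as [N1 HN1].
  destruct (Htk (IZR (N0 - j + 1) * h - t)) as [N2 HN2].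
  destruct (HN1 (Nat.max N1 N2) ltac:(lia)) as [d [Hd ->]]. apply HS.
  specialize (HN2 (Nat.max N1 N2) ltac:(lia)).
  destruct (floorZ_div_spec h Hh (t + tk (Nat.max N1 N2))) as [_ F].
  assert (IZR (N0 - j + 1) < IZR (floorZ ((t + tk (Nat.max N1 N2)) / h)) + 1) by nra.
  rewrite <- plus_IZR in H. apply lt_IZR in H. lia.
Qed.

Lemma alpha_lim_in p t (S : V -> Prop) N0 y : isPath p -> 0 <= t < h ->
  (forall i, (i <= N0)%Z -> S (p i)) -> alpha_lim V E h (rep p t) y -> forall s, S (y s).
Proof.
  intros Hp Ht HS [Dy [tk [Htk Hc]]] s.
  destruct (InDelta_rep V E h Hh y Dy) as [q [tau [Hq [Htau ->]]]].
  unfold rep. set (j := floorZ ((s + tau) / h)).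
  destruct (orbit_limit_window p t tk q tau j Hp Hq Ht ltac:(lra) Hc) as [N1 HN1].
  destruct (Htk (IZR (N0 - j - 1) * h - t)) as [N2 HN2].
  destruct (HN1 (Nat.max N1 N2) ltac:(lia)) as [d [Hd ->]]. apply HS.
  specialize (HN2 (Nat.max N1 N2) ltac:(lia)).
  destruct (floorZ_div_spec h Hh (t + tk (Nat.max N1 N2))) as [F _].
  assert (IZR (floorZ ((t + tk (Nat.max N1 N2)) / h)) < IZR (N0 - j - 1)) by nra.
  apply lt_IZR in H. lia.
Qed.

Lemma times_to_infty (n : nat -> Z) : (forall k, (Z.of_nat k <= n k)%Z) ->
  forall M, exists N, forall k, (N <= k)%nat -> M < IZR (n k) * h.
Proof.
  intros Hn M. destruct (nat_large (M / h)) as [N HN]. exists N. intros k Hk.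
  assert (INR N <= IZR (n k)).
  { rewrite INR_IZR_INZ. apply IZR_le. specialize (Hn k). lia. }
  apply Rmult_lt_reg_r with (/ h); [apply Rinv_0_lt_compat; auto|].
  rewrite Rmult_assoc, Rinv_r by lra. unfold Rdiv in HN. lra.
Qed.

Variable lV : list V.
Hypothesis HlV : forall v, In v lV.

Lemma DeltaC_seq_compact C : seq_compact V h (DeltaC C).
Proof.
  intros a Ha.
  assert (H : forall n, exists pt : (Z -> V) * R,
             isPath (fst pt) /\ 0 <= snd pt < h /\ a n = rep (fst pt) (snd pt)).
  { intro n. destruct (InDelta_rep V E h Hh (a n) (proj1 (Ha n))) as [p [t [A [B D]]]].
    exists (p, t). auto. }
  destruct (choice _ H) as [Pf HPf].
  destruct (rep_seq_convergent_subseq V E h Hh lV HlV (fun n => fst (Pf n)) (fun n => snd (Pf n)))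
    as [ph [q [tau [H1 [H2 [H3 [H4 H5]]]]]]];
    [intro n; apply HPf | intro n; destruct (HPf n) as [_ [A _]]; lra|].
  exists ph, (rep q tau). split; auto. split.
  - apply DeltaC_rep; auto. intro j. rewrite <- (H4 (S (Z.abs_nat j)) j) by lia.
    set (n := ph (S (Z.abs_nat j))). apply (DeltaC_rep_inv C _ (snd (Pf n))).
    destruct (HPf n) as [_ [_ D]]. rewrite <- D. apply Ha.
  - intros eps He. destruct (H5 eps He) as [N HN]. exists N. intros k Hk.
    destruct (HPf (ph k)) as [_ [_ D]]. rewrite D. apply HN; auto.
Qed.

Lemma DeltaC_compact C : compact V E h (DeltaC C).
Proof.
  apply (compact_of_seq_compact V E h Hh); [intros x [Hx _]; auto | apply DeltaC_seq_compact].
Qed.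

Lemma orbit_along_shifts_converges p t (m : nat -> Z) : isPath p -> 0 <= t < h ->
  exists (ph : nat -> nat) y, (forall k, (ph k < ph (S k))%nat) /\ Delta y /\
    seq_conv V h (fun k => psi V (IZR (m (ph k)) * h) (rep p t)) y.
Proof.
  intros Hp Ht.
  destruct (rep_seq_convergent_subseq V E h Hh lV HlV (fun n => shiftp V (m n) p) (fun _ => t))
    as [ph [q [tau [H1 [H2 [H3 [_ H5]]]]]]]; [intro n; apply isPath_shiftp; auto | intro; lra |].
  exists ph, (rep q tau). split; [auto | split; [apply rep_InDelta; auto|]].
  intros eps He. destruct (H5 eps He) as [N HN]. exists N. intros k Hk.
  rewrite (psi_rep_shiftp V h Hh p t _ (m (ph k))).
  replace (t + IZR (m (ph k)) * h - IZR (m (ph k)) * h) with t by ring. apply HN; auto.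
Qed.

Lemma omega_lim_exists x : Delta x -> exists y, omega_lim V E h x y.
Proof.
  intros Hx. destruct (InDelta_rep V E h Hh x Hx) as [p [t [Hp [Ht ->]]]].
  destruct (orbit_along_shifts_converges p t Z.of_nat Hp Ht) as [ph [y [Hph [Dy Hc]]]].
  exists y. split; auto. exists (fun k => IZR (Z.of_nat (ph k)) * h). split; auto.
  apply times_to_infty. intro k. pose proof (incr_seq_ge ph Hph k). lia.
Qed.

Lemma alpha_lim_exists x : Delta x -> exists y, alpha_lim V E h x y.
Proof.
  intros Hx. destruct (InDelta_rep V E h Hh x Hx) as [p [t [Hp [Ht ->]]]].
  destruct (orbit_along_shifts_converges p t (fun n => (- Z.of_nat n)%Z) Hp Ht)
    as [ph [y [Hph [Dy Hc]]]].
  exists y. split; auto. exists (fun k => IZR (- Z.of_nat (ph k)) * h). split; auto.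
  intro M. destruct (times_to_infty (fun k => Z.of_nat (ph k))) with (M := - M) as [N HN].
  { intro k. pose proof (incr_seq_ge ph Hph k). lia. }
  exists N. intros k Hk. specialize (HN k Hk). rewrite opp_IZR. lra.
Qed.

End Lifts.

(** * The Morse decomposition by lifts of components *)

Section Morse.
Variables (V : Type) (E : V -> V -> Prop) (h : R).
Hypothesis Hh : 0 < h.
Variable lV : list V.
Hypothesis HlV : forall v, In v lV.
Local Notation Delta := (InDelta V E h).
Local Notation DeltaC := (DeltaC V E h).
Local Notation SCCcollection := (SCCcollection V E h).
Local Notation rep := (rep V h).
Local Notation isPath := (isPath V E).
Local Notation reach := (reach V E).
Local Notation scc := (scc V E).

Lemma DeltaC_nonempty C : isSCC V E C -> exists x, DeltaC C x.
Proof.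
  intros [[u Hu] [Hs _]]. destruct (cycle_path V E C u (Hs u u Hu Hu)) as [p [Hp [HpC _]]].
  exists (rep p 0). apply (DeltaC_rep V E h Hh); auto.
Qed.

Lemma isSCC_eq_of_DeltaC_sub C C' : isSCC V E C -> isSCC V E C' ->
  (forall x, DeltaC C x -> DeltaC C' x) -> C = C'.
Proof.
  intros HC HC' Hsub. destruct (DeltaC_nonempty C HC) as [y Hy].
  destruct (Hsub y Hy) as [_ Hy'].
  rewrite (isSCC_eq_scc V E C (y 0) HC (proj2 Hy 0)), (isSCC_eq_scc V E C' (y 0) HC' (Hy' 0)).
  reflexivity.
Qed.

Lemma SCCcollection_finite : exists l : list (set V), forall K, SCCcollection K -> In K l.
Proof.
  exists (map (fun v => DeltaC (scc v)) lV). intros K [C [HC ->]].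
  pose proof HC as [[u Hu] _]. rewrite (isSCC_eq_scc V E C u HC Hu).
  apply (in_map (fun v => DeltaC (scc v))). auto.
Qed.

Lemma SCCcollection_sets K : SCCcollection K ->
  (forall x, K x -> Delta x) /\ (exists x, K x) /\
  invariant V K /\ isolated V E h K /\ compact V E h K.
Proof.
  intros [C [HC ->]]. split; [intros x [Hx _]; auto|]. split; [apply DeltaC_nonempty; auto|].
  split; [apply DeltaC_invariant; auto|].
  split; [apply DeltaC_isolated | apply (DeltaC_compact V E h Hh lV HlV)]; auto.
Qed.

Lemma SCCcollection_disjoint K K' : SCCcollection K -> SCCcollection K' -> K <> K' ->
  forall x, ~ (K x /\ K' x).
Proof.
  intros [C [HC ->]] [C' [HC' ->]] Hne x [[_ H1] [_ H2]]. apply Hne.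
  rewrite (isSCC_eq_scc V E C (x 0) HC (H1 0)), (isSCC_eq_scc V E C' (x 0) HC' (H2 0)).
  reflexivity.
Qed.

Lemma SCCcollection_limits x : Delta x ->
  (forall y, omega_lim V E h x y -> exists K, SCCcollection K /\ K y) /\
  (forall y, alpha_lim V E h x y -> exists K, SCCcollection K /\ K y).
Proof.
  intros Hx. destruct (InDelta_rep V E h Hh x Hx) as [p [t [Hp [Ht ->]]]]. split.
  - intros y Hy. destruct (isPath_eventually_in_scc V E lV HlV p Hp) as [u0 [N0 [Hu0 HN0]]].
    exists (DeltaC (scc u0)). split; [exists (scc u0); split; auto; apply isSCC_scc; auto|].
    split; [destruct Hy; auto|]. apply (omega_lim_in V E h Hh p t _ N0 y); auto.
  - intros y Hy. destruct (isPath_initially_in_scc V E lV HlV p Hp) as [u0 [N0 [Hu0 HN0]]].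
    exists (DeltaC (scc u0)). split; [exists (scc u0); split; auto; apply isSCC_scc; auto|].
    split; [destruct Hy; auto|]. apply (alpha_lim_in V E h Hh p t _ N0 y); auto.
Qed.

(* An orbit leaving the lift of [C] for the lift of [C'] follows a path that passes from
   [C] to [C'], and it cannot return, since the whole path would then lie in [C]. *)
Lemma connecting_orbit_reach C C' x : isSCC V E C -> isSCC V E C' -> Delta x -> ~ DeltaC C x ->
  (forall y, alpha_lim V E h x y -> DeltaC C y) -> (forall y, omega_lim V E h x y -> DeltaC C' y) ->
  forall a w, C a -> C' w -> reach a w /\ ~ reach w a.
Proof.
  intros HC HC' Dx Hnot Hal Hom a w Ha Hw.
  destruct (InDelta_rep V E h Hh x Dx) as [p [t [Hp [Ht ->]]]].
  destruct (isPath_initially_in_scc V E lV HlV p Hp) as [a0 [Na [_ HNa]]].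
  destruct (isPath_eventually_in_scc V E lV HlV p Hp) as [b0 [Nb [_ HNb]]].
  destruct (alpha_lim_exists V E h Hh lV HlV _ Dx) as [ya Hya].
  destruct (omega_lim_exists V E h Hh lV HlV _ Dx) as [yb Hyb].
  assert (Ca : C (ya 0)) by apply (proj2 (Hal ya Hya)).
  assert (Cb : C' (yb 0)) by apply (proj2 (Hom yb Hyb)).
  assert (Sa : scc a0 (ya 0)) by apply (alpha_lim_in V E h Hh p t _ Na ya Hp Ht HNa Hya).
  assert (Sb : scc b0 (yb 0)) by apply (omega_lim_in V E h Hh p t _ Nb yb Hp Ht HNb Hyb).
  assert (Hto : forall j, reach (p j) w).
  { intro j. apply reach_trans with (p (Z.max j Nb + 1)%Z); [apply isPath_reach; auto; lia|].
    apply reach_trans with b0; [apply HNb; lia|].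
    apply reach_trans with (yb 0); [apply Sb | apply (isSCC_reach V E C'); auto]. }
  assert (Hfrom : forall j, reach a (p j)).
  { intro j. apply reach_trans with (ya 0); [apply (isSCC_reach V E C); auto|].
    apply reach_trans with a0; [apply Sa|].
    apply reach_trans with (p (Z.min j Na - 1)%Z);
      [apply HNa; lia | apply isPath_reach; auto; lia]. }
  split; [apply reach_trans with (p 0%Z); auto|].
  intro Hback. apply Hnot, (DeltaC_rep V E h Hh); auto.
  intro j. rewrite (isSCC_eq_scc V E C a HC Ha). split; auto.
  apply reach_trans with w; auto.
Qed.

Lemma SCCcollection_no_cycles (l : nat) (M : nat -> set V) (xs : nat -> R -> V) :
  (1 <= l)%nat -> (forall m, (m <= l)%nat -> SCCcollection (M m)) ->
  (forall m, (1 <= m <= l)%nat ->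
     Delta (xs m) /\ (forall K, SCCcollection K -> ~ K (xs m)) /\
     (forall y, alpha_lim V E h (xs m) y -> M (m - 1)%nat y) /\
     (forall y, omega_lim V E h (xs m) y -> M m y)) ->
  ~ set_eq V (M 0%nat) (M l).
Proof.
  intros Hl HM Hx Heq.
  assert (Hstep : forall m C C', (1 <= m <= l)%nat -> isSCC V E C -> M (m - 1)%nat = DeltaC C ->
            isSCC V E C' -> M m = DeltaC C' -> forall a w, C a -> C' w -> reach a w /\ ~ reach w a).
  { intros m C C' Hm HC EC HC' EC'. destruct (Hx m Hm) as [Dx [Hnot [Hal Hom]]].
    apply connecting_orbit_reach with (xs m); auto.
    - rewrite <- EC. apply Hnot, HM. lia.
    - rewrite <- EC. auto.
    - rewrite <- EC'. auto. }
  destruct (HM 1%nat ltac:(lia)) as [C1 [HC1 E1]].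
  assert (Hchain : forall d, (1 + d <= l)%nat ->
             forall C, isSCC V E C -> M (1 + d)%nat = DeltaC C ->
             forall w z, C1 w -> C z -> reach w z).
  { induction d as [|d IH]; intros Hd C HC EC w z Hw Hz.
    - assert (C1 = C) as <- by (apply isSCC_eq_of_DeltaC_sub; auto; rewrite <- EC, <- E1; auto).
      apply (isSCC_reach V E C1); auto.
    - destruct (HM (1 + d)%nat ltac:(lia)) as [Cm [HCm ECm]].
      pose proof HCm as [[y Hy] _].
      apply reach_trans with y; [apply (IH ltac:(lia) Cm); auto|].
      apply (Hstep (1 + S d)%nat Cm C); auto. lia. }
  destruct (HM 0%nat ltac:(lia)) as [C0 [HC0 E0]].
  destruct (HM l ltac:(lia)) as [Cl [HCl El]].
  assert (C0 = Cl) as <- by (apply isSCC_eq_of_DeltaC_sub; auto; rewrite <- E0, <- El; apply Heq).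
  pose proof HC0 as [[c Hc] _]. pose proof HC1 as [[w Hw] _].
  apply (proj2 (Hstep 1%nat C0 C1 ltac:(lia) HC0 E0 HC1 E1 c w Hc Hw)).
  apply (Hchain (l - 1)%nat ltac:(lia) C0); auto. replace (1 + (l - 1))%nat with l by lia. auto.
Qed.

Lemma SCCcollection_MorseDecomposition : MorseDecomposition V E h SCCcollection.
Proof.
  split; [apply SCCcollection_finite|]. split; [apply SCCcollection_sets|].
  split; [apply SCCcollection_disjoint|]. split; [apply SCCcollection_limits|].
  exact SCCcollection_no_cycles.
Qed.

Lemma dense_orbit_omega_lim C p : isPath p ->
  (forall q, isPath q -> (forall i, C (q i)) -> forall (k : nat) (N : Z),
     exists n, (N <= n)%Z /\ forall j, (Z.abs j <= Z.of_nat k)%Z -> p (n + j)%Z = q j) ->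
  forall z, DeltaC C z -> omega_lim V E h (rep p 0) z.
Proof.
  intros Hp Hden z [Dz Hz]. split; auto.
  destruct (InDelta_rep V E h Hh z Dz) as [q [tau [Hq [Htau ->]]]].
  assert (HqC : forall j, C (q j)) by (apply (DeltaC_rep_inv V E h Hh C q tau); split; auto).
  destruct (choice (fun k n => (Z.of_nat k <= n)%Z /\
                      forall j, (Z.abs j <= Z.of_nat k)%Z -> p (n + j)%Z = q j))
    as [nf Hnf]; [intro k; apply (Hden q Hq HqC k (Z.of_nat k))|].
  exists (fun k => IZR (nf k) * h + tau). split.
  - intro M. destruct (times_to_infty h Hh nf (fun k => proj1 (Hnf k)) M) as [N HN].
    exists N. intros k Hk. specialize (HN k Hk). lra.
  - intros eps He. destruct (half_pow_small (eps / 4) ltac:(lra)) as [N HN].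
    exists (S N). intros [|k] Hk; [lia|].
    rewrite (psi_rep_shiftp V h Hh p 0 _ (nf (S k))).
    replace (0 + (IZR (nf (S k)) * h + tau) - IZR (nf (S k)) * h) with tau by ring.
    assert (D : dist V h (rep (shiftp V (nf (S k)) p) tau) (rep q tau)
                <= 2 * (2 * (Rabs (tau - tau) / h) + 2 * (/2) ^ k)).
    { apply (dist_rep_le_of_agree V E); [auto | apply isPath_shiftp | | | |]; auto; try lra.
      intros j Hj. apply (proj2 (Hnf (S k))). lia. }
    rewrite Rminus_diag, Rabs_R0 in D. unfold Rdiv in D. rewrite Rmult_0_l in D.
    specialize (HN k ltac:(lia)). lra.
Qed.

(* The omega-limit set of a dense orbit is the whole lift of [C] and contains the orbit itself,
   so it lies in a single Morse set; a finer decomposition would have to split it. *)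
Lemma SCCcollection_finest Coll : MorseDecomposition V E h Coll -> ~ finer V Coll SCCcollection.
Proof.
  intros [_ [Hprops [Hdisj [Hlim _]]]] [_ [K' [K [[C [HC ->]] [HK [Hsub Hnsub]]]]]].
  destruct HC as [Hne [Hsc _]].
  destruct (exists_dense_path V E C lV HlV Hsc Hne) as [p [Hp [HpC Hden]]].
  pose proof (dense_orbit_omega_lim C p Hp Hden) as Homg.
  assert (Dx : Delta (rep p 0)) by (apply rep_InDelta; auto).
  assert (Hxx : omega_lim V E h (rep p 0) (rep p 0)) by (apply Homg, DeltaC_rep; auto).
  destruct (proj1 (Hlim _ Dx) _ Hxx) as [K0 [HK0 K0x]].
  destruct (Hprops K0 HK0) as [K0D [_ [K0inv [_ K0c]]]].
  assert (Hall : forall z, DeltaC C z -> K0 z).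
  { intros z Hz. destruct (Homg z Hz) as [Dz [tk [_ Hc]]].
    apply (compact_closed V E h Hh K0 K0D K0c (fun k => psi V (tk k) (rep p 0)) z Dz); auto. }
  destruct (Hprops K HK) as [_ [[k0 Hk0] _]].
  destruct (classic (K = K0)) as [->|HKK0].
  - apply Hnsub. intros z Hz. apply Hall; auto.
  - apply (Hdisj K K0 HK HK0 HKK0 k0). split; [auto | apply Hall, Hsub; auto].
Qed.

End Morse.

Theorem mainTheorem10 (V : Type) (E : V -> V -> Prop) (h : R)
  (HV : finite_type V) (Hh : 0 < h) :
  MorseDecomposition V E h (SCCcollection V E h) /\
  forall Coll : set V -> Prop,
    MorseDecomposition V E h Coll -> ~ finer V Coll (SCCcollection V E h).
Proof.
  destruct HV as [lV HlV]. split.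
  - exact (SCCcollection_MorseDecomposition V E h Hh lV HlV).
  - exact (SCCcollection_finest V E h Hh lV HlV).
Qed.
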